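(* Let $h$ be a smooth function on a neighborhood of $(0,0)$ whose Taylor expansion at $(0,0)$ is $h(x,y)=a^2x^2+b^2y^2+\sum_{m+n\ge3}h_{m,n}x^my^n$, where $a,b>0$ are linearly independent over $\mathbb{Q}$. Then there is a $C^\infty$ function $\tilde z$ such that $\tilde z_x^2+\tilde z_y^2-h$ vanishes to infinite order at $(0,0)$. *)

From Stdlib Require Import Reals QArith List.
From Coquelicot Require Import Coquelicot.
Open Scope R_scope.

Inductive dir := DX | DY.

(* First-order partial derivative (Coquelicot's total Derive). *)
Definition pd (d : dir) (f : R -> R -> R) : R -> R -> R :=
  match d with
  | DX => fun x y => Derive (fun t => f t y) x
  | DY => fun x y => Derive (fun t => f x t) y
  end.

Definition ex_pd (d : dir) (f : R -> R -> R) (x y : R) : Prop :=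
  match d with
  | DX => ex_derive (fun t => f t y) x
  | DY => ex_derive (fun t => f x t) y
  end.

(* Iterated partial derivative along a word w = [d1; ...; dk]:
   pdw w f = pd d1 (pd d2 (... (pd dk f))). The empty word gives f. *)
Definition pdw (w : list dir) (f : R -> R -> R) : R -> R -> R :=
  fold_right pd f w.

Definition in_disk (r x y : R) : Prop := x * x + y * y < r * r.

Definition smooth_on_disk (r : R) (f : R -> R -> R) : Prop :=
  forall (w : list dir) (x y : R), in_disk r x y ->
    ex_pd DX (pdw w f) x y /\ ex_pd DY (pdw w f) x y /\
    continuous (fun p : R * R => pdw w f (fst p) (snd p)) (x, y).

Definition vanishes_inf_order_at0 (g : R -> R -> R) : Prop :=
  forall w : list dir, pdw w g 0 0 = 0.

Definition Q_lin_indep (a b : R) : Prop :=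
  forall p q : Q, Q2R p * a + Q2R q * b = 0 -> Q2R p = 0 /\ Q2R q = 0.

From Stdlib Require Import Reals QArith List Lra Lia Factorial FunctionalExtensionality IndefiniteDescription.
From Coquelicot Require Import Coquelicot.
Open Scope R_scope.

(* Start from z = (a x^2 + b y^2) / 2. Adding a homogeneous polynomial Q of degree n >= 3
   to z changes the defect z_x^2 + z_y^2 - h in degree n by 2 (a x Q_x + b y Q_y) only, and
   this operator multiplies x^i y^(n-i) by 2 (a i + b (n - i)) > 0; so Q can be chosen to
   cancel the degree-n part of the defect, and induction on n gives a formal power series
   solution. Borel's lemma realises it by a smooth function: sum its homogeneous parts with
   each monomial cut off at a scale shrinking fast enough for every derivative series to
   converge uniformly. *)

Ltac funext2 :=
  let x := fresh "x" in let y := fresh "y" in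
  apply functional_extensionality; intro x; apply functional_extensionality; intro y.

(** * Smooth functions on a disk *)

Lemma locally_of_ball x (P : R -> Prop) (d : posreal) :
  (forall t, Rabs (t - x) < d -> P t) -> locally x P.
Proof. intros H. exists d. exact H. Qed.

Lemma mult_self_abs u : u * u = Rabs u * Rabs u.
Proof. pose proof (Rsqr_abs u) as E. unfold Rsqr in E. exact E. Qed.

Lemma in_disk0 r : 0 < r -> in_disk r 0 0.
Proof. unfold in_disk; intros; nra. Qed.

Lemma in_disk_large x y : in_disk (Rabs x + Rabs y + 1) x y.
Proof.
  unfold in_disk. rewrite (mult_self_abs x), (mult_self_abs y).
  pose proof (Rabs_pos x); pose proof (Rabs_pos y). nra.
Qed.

Lemma in_disk_coord r x y : 0 < r -> in_disk r x y -> Rabs x <= r /\ Rabs y <= r.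
Proof.
  unfold in_disk. rewrite (mult_self_abs x), (mult_self_abs y). intros Hr H.
  pose proof (Rabs_pos x); pose proof (Rabs_pos y). split; nra.
Qed.

Lemma in_disk_locally r x y : in_disk r x y -> locally_2d (fun u v => in_disk r u v) x y.
Proof.
  unfold in_disk; intros H.
  set (e := r * r - (x * x + y * y)).
  set (K := 2 * Rabs x + 2 * Rabs y + 3).
  pose proof (Rabs_pos x); pose proof (Rabs_pos y).
  assert (He : 0 < e) by (unfold e; lra).
  assert (HK : 0 < K) by (unfold K; lra).
  set (d := Rmin 1 (e / K)).
  assert (Hd : 0 < d) by (apply Rmin_pos; [lra | apply Rdiv_lt_0_compat; lra]).
  assert (d <= 1) by apply Rmin_l.
  assert (HdK : d * K <= e).
  { apply Rle_trans with (e / K * K).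
    - apply Rmult_le_compat_r; [lra | apply Rmin_r].
    - right; field; lra. }
  exists (mkposreal d Hd); simpl; intros u v Hu Hv.
  assert (Rabs u <= Rabs x + d).
  { replace u with (x + (u - x)) by ring. eapply Rle_trans; [apply Rabs_triang | lra]. }
  assert (Rabs v <= Rabs y + d).
  { replace v with (y + (v - y)) by ring. eapply Rle_trans; [apply Rabs_triang | lra]. }
  pose proof (Rabs_pos u); pose proof (Rabs_pos v).
  rewrite (mult_self_abs u), (mult_self_abs v).
  pose proof (mult_self_abs x); pose proof (mult_self_abs y).
  unfold K, e in *. nra.
Qed.

Lemma locally_2d_in_disk r (P : R -> R -> Prop) x y :
  in_disk r x y -> (forall u v, in_disk r u v -> P u v) -> locally_2d P x y.
Proof.
  intros Hxy H. apply locally_2d_impl with (fun u v => in_disk r u v).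
  - apply locally_2d_forall. exact H.
  - apply in_disk_locally, Hxy.
Qed.

Lemma continuous_2d_iff F x y :
  continuous (fun p : R * R => F (fst p) (snd p)) (x, y) <-> continuity_2d_pt F x y.
Proof. symmetry. apply continuity_2d_pt_filterlim. Qed.

Lemma pd_ext_locally d F G x y :
  locally_2d (fun u v => F u v = G u v) x y ->
  pd d F x y = pd d G x y /\ (ex_pd d F x y -> ex_pd d G x y).
Proof.
  intros [e He].
  assert (L : locally (match d with DX => x | DY => y end)
     (fun t => match d with DX => F t y = G t y | DY => F x t = G x t end)).
  { apply locally_of_ball with e. intros t Ht.
    destruct d; apply He; auto; rewrite Rminus_eq_0, Rabs_R0; apply cond_pos. }
  destruct d; simpl; split;
    first [apply Derive_ext_loc; exact L | apply ex_derive_ext_loc; exact L].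
Qed.

Lemma pdw_app u v f : pdw (u ++ v) f = pdw u (pdw v f).
Proof. apply fold_right_app. Qed.

Lemma pdw_ext_disk r f g :
  (forall x y, in_disk r x y -> f x y = g x y) ->
  forall w x y, in_disk r x y -> pdw w f x y = pdw w g x y.
Proof.
  intros H w; induction w as [|d w IH]; intros x y Hxy; simpl; auto.
  apply pd_ext_locally. apply (locally_2d_in_disk r); auto.
Qed.

Lemma smooth_ext r f g :
  (forall x y, in_disk r x y -> f x y = g x y) ->
  smooth_on_disk r f -> smooth_on_disk r g.
Proof.
  intros H Hf w x y Hxy.
  assert (L : locally_2d (fun u v => pdw w f u v = pdw w g u v) x y).
  { apply (locally_2d_in_disk r); auto. intros; apply (pdw_ext_disk r); auto. }
  destruct (Hf w x y Hxy) as (H1 & H2 & H3).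
  split; [|split].
  - apply (pd_ext_locally DX _ _ x y L); auto.
  - apply (pd_ext_locally DY _ _ x y L); auto.
  - apply continuous_2d_iff. apply continuous_2d_iff in H3.
    eapply continuity_2d_pt_ext_loc; [exact L | exact H3].
Qed.

Lemma pd_plus_at d A B x y :
  ex_pd d A x y -> ex_pd d B x y ->
  pd d (fun x y => A x y + B x y) x y = pd d A x y + pd d B x y /\
  ex_pd d (fun x y => A x y + B x y) x y.
Proof.
  destruct d; simpl; intros; split;
  first [apply (Derive_plus (fun t => A t y) (fun t => B t y))
        |apply (Derive_plus (fun t => A x t) (fun t => B x t))
        |apply (ex_derive_plus (fun t => A t y) (fun t => B t y))
        |apply (ex_derive_plus (fun t => A x t) (fun t => B x t))]; auto.
Qed.

Lemma pd_mult_at d A B x y :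
  ex_pd d A x y -> ex_pd d B x y ->
  pd d (fun x y => A x y * B x y) x y = pd d A x y * B x y + A x y * pd d B x y /\
  ex_pd d (fun x y => A x y * B x y) x y.
Proof.
  destruct d; simpl; intros; split;
  first [apply (Derive_mult (fun t => A t y) (fun t => B t y))
        |apply (Derive_mult (fun t => A x t) (fun t => B x t))
        |apply (ex_derive_mult (fun t => A t y) (fun t => B t y))
        |apply (ex_derive_mult (fun t => A x t) (fun t => B x t))]; auto.
Qed.

Lemma pd_scal d c A : pd d (fun x y => c * A x y) = fun x y => c * pd d A x y.
Proof. funext2. destruct d; apply Derive_scal. Qed.

Lemma ex_pd_scal d c A x y : ex_pd d A x y -> ex_pd d (fun x y => c * A x y) x y.
Proof. destruct d; simpl; intros; apply ex_derive_scal; auto. Qed.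

Lemma pdw_scal c A w : pdw w (fun x y => c * A x y) = fun x y => c * pdw w A x y.
Proof. induction w as [|d w IH]; simpl; auto. rewrite IH. apply pd_scal. Qed.

Section SmoothOnDisk.

Variable r : R.

Lemma smooth_ex_pd f d w x y :
  smooth_on_disk r f -> in_disk r x y -> ex_pd d (pdw w f) x y.
Proof. intros H Hxy; destruct (H w x y Hxy) as (? & ? & ?); destruct d; auto. Qed.

Lemma smooth_continuity f w x y :
  smooth_on_disk r f -> in_disk r x y -> continuity_2d_pt (pdw w f) x y.
Proof. intros H Hxy; destruct (H w x y Hxy) as (? & ? & ?); apply continuous_2d_iff; auto. Qed.

Lemma smooth_pdw f w : smooth_on_disk r f -> smooth_on_disk r (pdw w f).
Proof. intros H w' x y Hxy. rewrite <- pdw_app. apply H; auto. Qed.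

Lemma smooth_pd f d : smooth_on_disk r f -> smooth_on_disk r (pd d f).
Proof. apply (smooth_pdw f (d :: nil)). Qed.

Lemma pdw_plus f g : smooth_on_disk r f -> smooth_on_disk r g ->
  forall w x y, in_disk r x y ->
  pdw w (fun x y => f x y + g x y) x y = pdw w f x y + pdw w g x y.
Proof.
  intros Hf Hg w; induction w as [|d w IH]; simpl; intros x y Hxy; auto.
  assert (L : locally_2d (fun u v => pdw w (fun x y => f x y + g x y) u v =
     pdw w f u v + pdw w g u v) x y) by (apply (locally_2d_in_disk r); auto).
  rewrite (proj1 (pd_ext_locally d _ _ x y L)).
  apply pd_plus_at; apply smooth_ex_pd; auto.
Qed.

Lemma smooth_plus f g : smooth_on_disk r f -> smooth_on_disk r g ->
  smooth_on_disk r (fun x y => f x y + g x y).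
Proof.
  intros Hf Hg w x y Hxy.
  assert (L : locally_2d (fun u v => pdw w f u v + pdw w g u v =
                                     pdw w (fun x y => f x y + g x y) u v) x y).
  { apply (locally_2d_in_disk r); auto. intros; symmetry; apply pdw_plus; auto. }
  destruct (Hf w x y Hxy) as (A1 & A2 & A3).
  destruct (Hg w x y Hxy) as (B1 & B2 & B3).
  split; [|split].
  - apply (pd_ext_locally DX _ _ x y L). apply pd_plus_at; auto.
  - apply (pd_ext_locally DY _ _ x y L). apply pd_plus_at; auto.
  - apply continuous_2d_iff. apply continuous_2d_iff in A3. apply continuous_2d_iff in B3.
    eapply continuity_2d_pt_ext_loc; [exact L |].
    apply continuity_2d_pt_plus; auto.
Qed.

Lemma smooth_scal c f : smooth_on_disk r f -> smooth_on_disk r (fun x y => c * f x y).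
Proof.
  intros Hf w x y Hxy. rewrite pdw_scal.
  destruct (Hf w x y Hxy) as (A1 & A2 & A3).
  split; [|split]; try (apply ex_pd_scal; auto).
  apply (continuous_2d_iff (fun x y => c * pdw w f x y)). apply continuous_2d_iff in A3.
  apply continuity_2d_pt_mult; auto. apply continuity_2d_pt_const.
Qed.

Lemma smooth_minus f g : smooth_on_disk r f -> smooth_on_disk r g ->
  smooth_on_disk r (fun x y => f x y - g x y).
Proof.
  intros Hf Hg.
  apply smooth_ext with (fun x y => f x y + (-1) * g x y).
  - intros; ring.
  - apply smooth_plus; auto. apply smooth_scal; auto.
Qed.

Lemma pdw_minus f g : smooth_on_disk r f -> smooth_on_disk r g ->
  forall w x y, in_disk r x y ->
  pdw w (fun x y => f x y - g x y) x y = pdw w f x y - pdw w g x y.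
Proof.
  intros Hf Hg w x y Hxy.
  replace (fun x y => f x y - g x y) with (fun x y => f x y + (-1) * g x y)
    by (funext2; ring).
  rewrite pdw_plus, pdw_scal; auto. ring. apply smooth_scal; auto.
Qed.

End SmoothOnDisk.

(** * Leibniz rule and vanishing order at the origin *)

(* A pair (u, v) in the list stands for the term pdw u f * pdw v g. *)
Fixpoint leibniz_sum (L : list (list dir * list dir)) (f g : R -> R -> R) (x y : R) : R :=
  match L with
  | nil => 0
  | p :: L => pdw (fst p) f x y * pdw (snd p) g x y + leibniz_sum L f g x y
  end.

Definition leibniz_step (d : dir) (L : list (list dir * list dir)) :=
  flat_map (fun p => (d :: fst p, snd p) :: (fst p, d :: snd p) :: nil) L.

Lemma pd_leibniz_sum d L f g x y :
  (forall p, In p L -> ex_pd d (pdw (fst p) f) x y /\ ex_pd d (pdw (snd p) g) x y) ->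
  pd d (leibniz_sum L f g) x y = leibniz_sum (leibniz_step d L) f g x y /\
  ex_pd d (leibniz_sum L f g) x y.
Proof.
  induction L as [|p L IH]; intros H.
  - change (leibniz_sum nil f g) with (fun _ _ : R => 0).
    destruct d; simpl; split; try apply Derive_const; apply ex_derive_const.
  - destruct (H p (or_introl eq_refl)) as [H1 H2].
    destruct IH as [IH1 IH2]. { intros; apply H; right; auto. }
    change (leibniz_sum (p :: L) f g) with
      (fun x y => (fun x y => pdw (fst p) f x y * pdw (snd p) g x y) x y + leibniz_sum L f g x y).
    destruct (pd_mult_at d (pdw (fst p) f) (pdw (snd p) g) x y H1 H2) as [M1 M2].
    destruct (pd_plus_at d _ (leibniz_sum L f g) x y M2 IH2) as [P1 P2].
    split; auto. rewrite P1, M1, IH1. simpl. ring.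
Qed.

Lemma continuity_leibniz_sum L f g x y :
  (forall p, In p L ->
     continuity_2d_pt (pdw (fst p) f) x y /\ continuity_2d_pt (pdw (snd p) g) x y) ->
  continuity_2d_pt (leibniz_sum L f g) x y.
Proof.
  induction L as [|p L IH]; intros H; simpl.
  - apply continuity_2d_pt_const.
  - apply continuity_2d_pt_plus; [apply continuity_2d_pt_mult | apply IH].
    all: try (apply H; left; auto). intros; apply H; right; auto.
Qed.

Section Leibniz.

Variables (r : R) (f g : R -> R -> R).
Hypotheses (Hf : smooth_on_disk r f) (Hg : smooth_on_disk r g).

Lemma pdw_mult_leibniz w : exists L,
  List.Forall (fun p => (length (fst p) + length (snd p) = length w)%nat) L /\
  forall x y, in_disk r x y -> pdw w (fun x y => f x y * g x y) x y = leibniz_sum L f g x y.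
Proof.
  induction w as [|d w IH].
  - exists ((nil, nil) :: nil). split; [repeat constructor |]. intros; simpl; ring.
  - destruct IH as [L [HL IH]]. exists (leibniz_step d L). split.
    + apply List.Forall_flat_map. eapply List.Forall_impl; [| exact HL].
      intros p Hp. simpl in *. repeat constructor; simpl; lia.
    + intros x y Hxy. simpl.
      assert (LOC : locally_2d (fun u v => pdw w (fun x y => f x y * g x y) u v =
         leibniz_sum L f g u v) x y) by (apply (locally_2d_in_disk r); auto).
      rewrite (proj1 (pd_ext_locally d _ _ x y LOC)).
      apply pd_leibniz_sum. intros p _. split; apply (smooth_ex_pd r); auto.
Qed.

Lemma smooth_mult : smooth_on_disk r (fun x y => f x y * g x y).
Proof.
  intros w x y Hxy.
  destruct (pdw_mult_leibniz w) as [L [_ HL]].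
  assert (L2 : locally_2d (fun u v =>
     leibniz_sum L f g u v = pdw w (fun x y => f x y * g x y) u v) x y).
  { apply (locally_2d_in_disk r); auto. intros; symmetry; auto. }
  assert (Hex : forall d, ex_pd d (leibniz_sum L f g) x y).
  { intros d. apply pd_leibniz_sum. intros p _. split; apply (smooth_ex_pd r); auto. }
  split; [| split].
  - apply (pd_ext_locally DX _ _ x y L2), Hex.
  - apply (pd_ext_locally DY _ _ x y L2), Hex.
  - apply continuous_2d_iff. eapply continuity_2d_pt_ext_loc; [exact L2 |].
    apply continuity_leibniz_sum. intros p _. split; apply (smooth_continuity r); auto.
Qed.

End Leibniz.

Definition vanishes_to (k : nat) (f : R -> R -> R) : Prop :=
  forall w, (length w < k)%nat -> pdw w f 0 0 = 0.

Lemma vanishes_to_le k l f : (l <= k)%nat -> vanishes_to k f -> vanishes_to l f.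
Proof. intros H Hf w Hw. apply Hf. lia. Qed.

Lemma vanishes_to_0 f : vanishes_to 0 f.
Proof. intros w Hw. lia. Qed.

Lemma vanishes_to_scal k c f : vanishes_to k f -> vanishes_to k (fun x y => c * f x y).
Proof. intros Vf w Hw. rewrite pdw_scal, Vf; auto; ring. Qed.

Lemma vanishes_to_pd k d f : vanishes_to (S k) f -> vanishes_to k (pd d f).
Proof.
  intros Vf w Hw. change (pd d f) with (pdw (d :: nil) f). rewrite <- pdw_app.
  apply Vf. rewrite length_app; simpl; lia.
Qed.

Section VanishingOrder.

Variables (r : R) (f g : R -> R -> R).
Hypotheses (Hr : 0 < r) (Hf : smooth_on_disk r f) (Hg : smooth_on_disk r g).

Lemma vanishes_to_plus k :
  vanishes_to k f -> vanishes_to k g -> vanishes_to k (fun x y => f x y + g x y).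
Proof.
  intros Vf Vg w Hw. rewrite (pdw_plus r) by (auto; apply in_disk0; auto).
  rewrite Vf, Vg; auto; ring.
Qed.

Lemma vanishes_to_mult k l :
  vanishes_to k f -> vanishes_to l g -> vanishes_to (k + l) (fun x y => f x y * g x y).
Proof.
  intros Vf Vg w Hw.
  destruct (pdw_mult_leibniz r f g Hf Hg w) as [L [HL E]].
  rewrite E by (apply in_disk0; auto). clear E.
  induction L as [|p L IH]; simpl; auto.
  inversion HL; subst. rewrite IH; auto.
  destruct (Nat.lt_ge_cases (length (fst p)) k).
  - rewrite Vf; auto; ring.
  - rewrite Vg; [ring | lia].
Qed.

End VanishingOrder.

(** * Symmetry of mixed partial derivatives *)

Lemma pdw_swap_at r f x y : smooth_on_disk r f -> in_disk r x y ->
  pdw (DY :: DX :: nil) f x y = pdw (DX :: DY :: nil) f x y.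
Proof.
  intros Hf Hxy. symmetry.
  change (Derive (fun z => Derive (fun t => f z t) y) x =
          Derive (fun z => Derive (fun t => f t z) x) y).
  apply Schwarz.
  - apply (locally_2d_in_disk r); auto. intros u v Huv.
    pose proof (smooth_ex_pd r f DX nil u v Hf Huv).
    pose proof (smooth_ex_pd r f DY nil u v Hf Huv).
    pose proof (smooth_ex_pd r f DX (DY :: nil) u v Hf Huv).
    pose proof (smooth_ex_pd r f DY (DX :: nil) u v Hf Huv).
    simpl in *. tauto.
  - exact (smooth_continuity r f (DX :: DY :: nil) x y Hf Hxy).
  - exact (smooth_continuity r f (DY :: DX :: nil) x y Hf Hxy).
Qed.

Lemma pdw_swap r f u v x y : smooth_on_disk r f -> in_disk r x y ->
  pdw (u ++ DY :: DX :: v) f x y = pdw (u ++ DX :: DY :: v) f x y.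
Proof.
  intros Hf Hxy. rewrite !pdw_app.
  apply (pdw_ext_disk r); auto. intros x' y' H'.
  apply (pdw_swap_at r); auto. apply smooth_pdw; auto.
Qed.

Lemma pdw_move_DY r f n : smooth_on_disk r f -> forall u v x y, in_disk r x y ->
  pdw (u ++ DY :: repeat DX n ++ v) f x y = pdw (u ++ repeat DX n ++ DY :: v) f x y.
Proof.
  intros Hf; induction n as [|n IH]; intros u v x y Hxy; simpl; auto.
  rewrite (pdw_swap r) by auto.
  replace (u ++ DX :: DY :: repeat DX n ++ v)
    with ((u ++ DX :: nil) ++ DY :: repeat DX n ++ v) by (rewrite <- app_assoc; reflexivity).
  rewrite IH by auto. rewrite <- app_assoc. reflexivity.
Qed.

Fixpoint xcount (w : list dir) : nat :=
  match w with nil => 0 | DX :: w => S (xcount w) | DY :: w => xcount w end.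
Fixpoint ycount (w : list dir) : nat :=
  match w with nil => 0 | DX :: w => ycount w | DY :: w => S (ycount w) end.

Lemma xcount_ycount w : (xcount w + ycount w = length w)%nat.
Proof. induction w as [|[] w IH]; simpl; lia. Qed.

Definition sort_word (w : list dir) := repeat DX (xcount w) ++ repeat DY (ycount w).

Lemma pdw_sort_word r f : smooth_on_disk r f -> forall w x y, in_disk r x y ->
  pdw w f x y = pdw (sort_word w) f x y.
Proof.
  intros Hf w; induction w as [|d w IH]; intros x y Hxy; simpl; auto.
  assert (LOC : locally_2d (fun u v => pdw w f u v = pdw (sort_word w) f u v) x y)
    by (apply (locally_2d_in_disk r); auto).
  rewrite (proj1 (pd_ext_locally d _ _ x y LOC)).
  change (pd d (pdw (sort_word w) f) x y) with (pdw (d :: sort_word w) f x y).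
  destruct d; unfold sort_word; simpl; auto.
  apply (pdw_move_DY r f (xcount w) Hf nil); auto.
Qed.

Definition jet (f : R -> R -> R) (i j : nat) : R := pdw (repeat DX i ++ repeat DY j) f 0 0.

Lemma pdw_jet r f w : 0 < r -> smooth_on_disk r f -> pdw w f 0 0 = jet f (xcount w) (ycount w).
Proof. intros Hr Hf. apply (pdw_sort_word r); auto. apply in_disk0; auto. Qed.

(** * Separable functions and homogeneous polynomials *)

Definition smooth1 (f : R -> R) : Prop := forall n x, ex_derive (Derive_n f n) x.

Lemma smooth1_continuity f k x : smooth1 f -> continuity_pt (Derive_n f k) x.
Proof.
  intros H. apply continuity_pt_filterlim, (ex_derive_continuous (Derive_n f k)), H.
Qed.

Lemma Derive_n_S f n : Derive_n f (S n) = Derive_n (Derive f) n.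
Proof.
  apply functional_extensionality; intro x.
  replace (S n) with (n + 1)%nat by lia. rewrite <- Derive_n_comp. reflexivity.
Qed.

Lemma Derive_n_scal c f n : Derive_n (fun x => c * f x) n = fun x => c * Derive_n f n x.
Proof. apply functional_extensionality; intro x; apply Derive_n_scal_l. Qed.

Lemma smooth1_const c : smooth1 (fun _ => c).
Proof.
  intros [|n] x; [apply ex_derive_const |].
  apply ex_derive_ext with (fun _ => 0); [intros; symmetry; apply Derive_n_const |].
  apply ex_derive_const.
Qed.

Lemma smooth1_scal c f : smooth1 f -> smooth1 (fun x => c * f x).
Proof. intros H n x. rewrite Derive_n_scal. apply ex_derive_scal, H. Qed.

Lemma smooth1_of_derive f g : (forall x, is_derive f x (g x)) -> smooth1 g -> smooth1 f.
Proof.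
  intros H Hg [|n] x.
  - eexists; apply H.
  - assert (E : Derive f = g)
      by (apply functional_extensionality; intro t; apply is_derive_unique, H).
    rewrite Derive_n_S, E. apply Hg.
Qed.

Lemma Derive_pow_S m : Derive (fun x => x ^ S m) = fun x => INR (S m) * x ^ m.
Proof.
  apply functional_extensionality; intro x.
  rewrite (Derive_pow (fun t => t)) by apply ex_derive_id.
  rewrite Derive_id. simpl pred. ring.
Qed.

Lemma smooth1_pow m : smooth1 (fun x => x ^ m).
Proof.
  induction m as [|m IH]; [exact (smooth1_const 1) |].
  apply smooth1_of_derive with (fun x => INR (S m) * x ^ m).
  - intros x. auto_derive; auto. change (1 * (INR (S m) * x ^ m) = INR (S m) * x ^ m). ring.
  - apply smooth1_scal, IH.
Qed.

Lemma Derive_n_pow_0 m k :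
  Derive_n (fun x => x ^ m) k 0 = if Nat.eqb k m then INR (fact m) else 0.
Proof.
  revert k; induction m as [|m IH]; intros [|k].
  - reflexivity.
  - apply (Derive_n_const k 1).
  - simpl. ring.
  - rewrite Derive_n_S, Derive_pow_S, Derive_n_scal, IH. simpl Nat.eqb.
    destruct (Nat.eqb k m); [| ring]. rewrite fact_simpl, mult_INR. ring.
Qed.

Lemma Derive_n_affine f al be : smooth1 f -> forall n,
  Derive_n (fun u => f (al + be * u)) n = fun u => be ^ n * Derive_n f n (al + be * u).
Proof.
  intros Hf n; induction n as [|n IH]; apply functional_extensionality; intro u.
  - simpl; ring.
  - change (Derive (Derive_n (fun u => f (al + be * u)) n) u =
            be ^ S n * Derive_n f (S n) (al + be * u)).
    rewrite IH. apply is_derive_unique.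
    replace (be ^ S n * Derive_n f (S n) (al + be * u))
      with (be ^ n * (be * Derive (Derive_n f n) (al + be * u))) by (simpl; ring).
    apply (is_derive_scal (fun u => Derive_n f n (al + be * u))).
    apply (is_derive_comp (Derive_n f n) (fun u => al + be * u)).
    + apply Derive_correct, Hf.
    + auto_derive; auto. ring.
Qed.

Lemma smooth1_affine f al be : smooth1 f -> smooth1 (fun u => f (al + be * u)).
Proof.
  intros Hf n x. rewrite (Derive_n_affine f al be Hf n).
  apply ex_derive_scal, (ex_derive_comp (Derive_n f n) (fun u => al + be * u)).
  - apply Hf.
  - auto_derive; auto.
Qed.

Definition sep (f g : R -> R) : R -> R -> R := fun x y => f x * g y.

Lemma pdw_sep f g w : pdw w (sep f g) = sep (Derive_n f (xcount w)) (Derive_n g (ycount w)).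
Proof.
  induction w as [|d w IH]; simpl; auto. rewrite IH.
  funext2. unfold sep; destruct d; simpl.
  - rewrite (Derive_ext (fun t => Derive_n f (xcount w) t * Derive_n g (ycount w) y)
             (fun t => Derive_n g (ycount w) y * Derive_n f (xcount w) t)) by (intros; ring).
    rewrite Derive_scal. ring.
  - apply Derive_scal.
Qed.

Lemma smooth_sep r f g : smooth1 f -> smooth1 g -> smooth_on_disk r (sep f g).
Proof.
  intros Hf Hg w x y _. rewrite pdw_sep. unfold sep. split; [| split]; simpl.
  - apply ex_derive_mult; [apply Hf | apply ex_derive_const].
  - apply ex_derive_mult; [apply ex_derive_const | apply Hg].
  - apply (continuous_2d_iff (fun x y => Derive_n f (xcount w) x * Derive_n g (ycount w) y)).
    apply continuity_2d_pt_mult.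
    + apply (continuity_1d_2d_pt_comp (Derive_n f (xcount w)) (fun u _ => u)).
      apply smooth1_continuity; auto. apply continuity_2d_pt_id1.
    + apply (continuity_1d_2d_pt_comp (Derive_n g (ycount w)) (fun _ v => v)).
      apply smooth1_continuity; auto. apply continuity_2d_pt_id2.
Qed.

Definition smooth2 (f : R -> R -> R) : Prop := forall r, smooth_on_disk r f.

Lemma smooth2_plus f g : smooth2 f -> smooth2 g -> smooth2 (fun x y => f x y + g x y).
Proof. intros ? ? r; apply smooth_plus; auto. Qed.
Lemma smooth2_minus f g : smooth2 f -> smooth2 g -> smooth2 (fun x y => f x y - g x y).
Proof. intros ? ? r; apply smooth_minus; auto. Qed.
Lemma smooth2_mult f g : smooth2 f -> smooth2 g -> smooth2 (fun x y => f x y * g x y).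
Proof. intros ? ? r; apply smooth_mult; auto. Qed.
Lemma smooth2_scal c f : smooth2 f -> smooth2 (fun x y => c * f x y).
Proof. intros ? r; apply smooth_scal; auto. Qed.
Lemma smooth2_pd d f : smooth2 f -> smooth2 (pd d f).
Proof. intros ? r; apply smooth_pd; auto. Qed.
Lemma smooth2_ext f g : (forall x y, f x y = g x y) -> smooth2 f -> smooth2 g.
Proof. intros E H r; apply smooth_ext with f; auto. Qed.
Lemma smooth2_sep f g : smooth1 f -> smooth1 g -> smooth2 (sep f g).
Proof. intros ? ? r; apply smooth_sep; auto. Qed.

Lemma smooth2_ex_pd f d w x y : smooth2 f -> ex_pd d (pdw w f) x y.
Proof. intros H; apply (smooth_ex_pd _ f d w x y (H _) (in_disk_large x y)). Qed.

Lemma pdw_plus_fun f g w : smooth2 f -> smooth2 g ->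
  pdw w (fun x y => f x y + g x y) = fun x y => pdw w f x y + pdw w g x y.
Proof.
  intros Hf Hg. funext2. apply (pdw_plus _ f g (Hf _) (Hg _) w x y (in_disk_large x y)).
Qed.

Lemma pdw_minus_fun f g w : smooth2 f -> smooth2 g ->
  pdw w (fun x y => f x y - g x y) = fun x y => pdw w f x y - pdw w g x y.
Proof.
  intros Hf Hg. funext2. apply (pdw_minus _ f g (Hf _) (Hg _) w x y (in_disk_large x y)).
Qed.

Lemma pd_plus_fun d f g : smooth2 f -> smooth2 g ->
  pd d (fun x y => f x y + g x y) = fun x y => pd d f x y + pd d g x y.
Proof. apply (pdw_plus_fun f g (d :: nil)). Qed.

Lemma pd_minus_fun d f g : smooth2 f -> smooth2 g ->
  pd d (fun x y => f x y - g x y) = fun x y => pd d f x y - pd d g x y.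
Proof. apply (pdw_minus_fun f g (d :: nil)). Qed.

Lemma pdw_repeat_DX f n : pdw (repeat DX n) (fun x y => f x) = fun x y => Derive_n f n x.
Proof. induction n as [|n IH]; simpl; auto. rewrite IH. reflexivity. Qed.

Lemma smooth1_of_smooth2 f : smooth2 (fun x y => f x) -> smooth1 f.
Proof.
  intros H n x. pose proof (smooth2_ex_pd (fun x y => f x) DX (repeat DX n) x 0 H) as E.
  rewrite pdw_repeat_DX in E. exact E.
Qed.

Lemma smooth1_mult f g : smooth1 f -> smooth1 g -> smooth1 (fun x => f x * g x).
Proof.
  intros Hf Hg. apply smooth1_of_smooth2.
  assert (Hsep : forall k, smooth1 k -> smooth2 (fun x y => k x)).
  { intros k Hk. apply smooth2_ext with (sep k (fun _ => 1)).
    - intros; unfold sep; ring.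
    - apply smooth2_sep; auto. apply smooth1_const. }
  apply (smooth2_mult (fun x y => f x) (fun x y => g x)); auto.
Qed.

Lemma sum_f_R0_delta (f : nat -> R) k n : (forall i, i <> k -> f i = 0) ->
  sum_f_R0 f n = if Nat.leb k n then f k else 0.
Proof.
  intros H; induction n as [|n IH]; simpl.
  - destruct k as [|k]; simpl; [reflexivity |]. apply H; lia.
  - rewrite IH. destruct (Nat.leb_spec k n); destruct (Nat.leb_spec k (S n)); try lia.
    + rewrite (H (S n)); [ring | lia].
    + replace k with (S n) by lia. ring.
    + rewrite H; [ring | lia].
Qed.

Lemma smooth_sum r (F : nat -> R -> R -> R) n : (forall i, smooth_on_disk r (F i)) ->
  smooth_on_disk r (fun x y => sum_f_R0 (fun i => F i x y) n).
Proof. intros H; induction n as [|n IH]; simpl; [apply H | apply smooth_plus; auto]. Qed.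

Lemma smooth2_sum (F : nat -> R -> R -> R) n : (forall i, smooth2 (F i)) ->
  smooth2 (fun x y => sum_f_R0 (fun i => F i x y) n).
Proof. intros H r; apply smooth_sum; intros; apply H. Qed.

Lemma pdw_sum_fun (F : nat -> R -> R -> R) n w : (forall i, smooth2 (F i)) ->
  pdw w (fun x y => sum_f_R0 (fun i => F i x y) n) =
  fun x y => sum_f_R0 (fun i => pdw w (F i) x y) n.
Proof.
  intros H; induction n as [|n IH]; simpl; auto.
  rewrite pdw_plus_fun, IH; auto. apply smooth2_sum; auto.
Qed.

Definition monomial (i j : nat) : R -> R -> R := sep (fun x => x ^ i) (fun y => y ^ j).

Definition hpoly (n : nat) (c : nat -> R) : R -> R -> R :=
  fun x y => sum_f_R0 (fun i => c i * monomial i (n - i) x y) n.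

Lemma smooth2_monomial i j : smooth2 (monomial i j).
Proof. apply smooth2_sep; apply smooth1_pow. Qed.

Lemma smooth2_hpoly n c : smooth2 (hpoly n c).
Proof. apply smooth2_sum. intros i. apply smooth2_scal, smooth2_monomial. Qed.

Lemma pdw_monomial_0 i j w : pdw w (monomial i j) 0 0 =
  (if Nat.eqb (xcount w) i then INR (fact i) else 0) *
  (if Nat.eqb (ycount w) j then INR (fact j) else 0).
Proof. unfold monomial. rewrite pdw_sep. unfold sep. rewrite !Derive_n_pow_0. reflexivity. Qed.

Lemma pdw_hpoly_0 n c w : pdw w (hpoly n c) 0 0 =
  if Nat.eqb (length w) n
  then c (xcount w) * INR (fact (xcount w)) * INR (fact (ycount w)) else 0.
Proof.
  unfold hpoly. rewrite pdw_sum_fun by (intros; apply smooth2_scal, smooth2_monomial).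
  pose proof (xcount_ycount w).
  rewrite (sum_f_R0_delta _ (xcount w)).
  - rewrite pdw_scal, pdw_monomial_0, Nat.eqb_refl.
    destruct (Nat.eqb_spec (length w) n); destruct (Nat.leb_spec (xcount w) n); try lia; try ring.
    + replace (n - xcount w)%nat with (ycount w) by lia. rewrite Nat.eqb_refl. ring.
    + replace (Nat.eqb (ycount w) (n - xcount w)) with false
        by (symmetry; apply Nat.eqb_neq; lia). ring.
  - intros i Hi. rewrite pdw_scal, pdw_monomial_0.
    replace (Nat.eqb (xcount w) i) with false by (symmetry; apply Nat.eqb_neq; lia). ring.
Qed.

Lemma vanishes_to_hpoly n c : vanishes_to n (hpoly n c).
Proof.
  intros w Hw. rewrite pdw_hpoly_0. replace (Nat.eqb (length w) n) with false; auto.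
  symmetry; apply Nat.eqb_neq; lia.
Qed.

Lemma Derive_pow_euler i x : x * Derive (fun t => t ^ i) x = INR i * x ^ i.
Proof.
  destruct i as [|i].
  - change (fun t : R => t ^ 0) with (fun _ : R => 1). rewrite Derive_const. simpl; ring.
  - rewrite Derive_pow_S. simpl. ring.
Qed.

Lemma hpoly_euler a b n c x y :
  a * x * pd DX (hpoly n c) x y + b * y * pd DY (hpoly n c) x y =
  hpoly n (fun i => c i * (a * INR i + b * INR (n - i))) x y.
Proof.
  change (pd DX (hpoly n c)) with (pdw (DX :: nil) (hpoly n c)).
  change (pd DY (hpoly n c)) with (pdw (DY :: nil) (hpoly n c)).
  unfold hpoly. rewrite !pdw_sum_fun by (intros; apply smooth2_scal, smooth2_monomial).
  rewrite !scal_sum, <- plus_sum. apply sum_eq. intros i _.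
  rewrite !pdw_scal. unfold monomial. rewrite !pdw_sep. unfold sep. simpl.
  pose proof (Derive_pow_euler i x) as Ex. pose proof (Derive_pow_euler (n - i) y) as Ey.
  transitivity (c i * a * (x * Derive (fun t => t ^ i) x) * y ^ (n - i) +
                c i * b * x ^ i * (y * Derive (fun t => t ^ (n - i)) y)); [ring |].
  rewrite Ex, Ey. ring.
Qed.

(** * The formal solution *)

Definition grad_dot (F G : R -> R -> R) (x y : R) : R :=
  pd DX F x y * pd DX G x y + pd DY F x y * pd DY G x y.

Definition eikonal_defect (h Z : R -> R -> R) (x y : R) : R :=
  pd DX Z x y ^ 2 + pd DY Z x y ^ 2 - h x y.

Lemma smooth2_grad_dot F G : smooth2 F -> smooth2 G -> smooth2 (grad_dot F G).
Proof.
  intros HF HG. unfold grad_dot.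
  apply smooth2_plus; apply smooth2_mult; apply smooth2_pd; auto.
Qed.

Lemma smooth_eikonal_defect r h Z :
  smooth_on_disk r h -> smooth2 Z -> smooth_on_disk r (eikonal_defect h Z).
Proof.
  intros Hh HZ. apply smooth_ext with (fun x y => grad_dot Z Z x y - h x y).
  - intros; unfold grad_dot, eikonal_defect; ring.
  - apply smooth_minus; auto. apply smooth2_grad_dot; auto.
Qed.

Lemma grad_dot_minus_l F G H : smooth2 F -> smooth2 G ->
  grad_dot (fun x y => F x y - G x y) H = fun x y => grad_dot F H x y - grad_dot G H x y.
Proof.
  intros HF HG. unfold grad_dot.
  rewrite !pd_minus_fun by auto.
  funext2. ring.
Qed.

Lemma eikonal_defect_plus h Z Q : smooth2 Z -> smooth2 Q ->
  eikonal_defect h (fun x y => Z x y + Q x y) =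
  fun x y => eikonal_defect h Z x y + (2 * grad_dot Z Q x y + grad_dot Q Q x y).
Proof.
  intros HZ HQ. unfold eikonal_defect, grad_dot.
  rewrite !pd_plus_fun by auto.
  funext2. ring.
Qed.

Lemma vanishes_to_grad_dot r k l F G : 0 < r -> smooth2 F -> smooth2 G ->
  vanishes_to (S k) F -> vanishes_to l (pd DX G) -> vanishes_to l (pd DY G) ->
  vanishes_to (k + l) (grad_dot F G).
Proof.
  intros Hr HF HG VF VGx VGy. unfold grad_dot.
  assert (Hterm : forall d, smooth2 (fun x y => pd d F x y * pd d G x y) /\
                            vanishes_to (k + l) (fun x y => pd d F x y * pd d G x y)).
  { intros d. split; [apply smooth2_mult; apply smooth2_pd; auto |].
    apply (vanishes_to_mult r); try apply smooth2_pd; auto.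
    - apply vanishes_to_pd, VF.
    - destruct d; auto. }
  apply (vanishes_to_plus r); auto; apply Hterm.
Qed.

Lemma vanishes_to_eikonal_defect r h z Z k : 0 < r -> smooth_on_disk r h ->
  smooth2 z -> smooth2 Z -> vanishes_to (S k) (fun x y => z x y - Z x y) ->
  vanishes_to k (eikonal_defect h Z) -> vanishes_to k (eikonal_defect h z).
Proof.
  intros Hr Hh Hz HZ Vd VE.
  set (D := fun x y => z x y - Z x y).
  assert (HD : smooth2 D) by (apply smooth2_minus; auto).
  replace (eikonal_defect h z)
    with (fun x y => eikonal_defect h Z x y + grad_dot D (fun x y => z x y + Z x y) x y).
  2:{ unfold eikonal_defect, grad_dot, D.
      rewrite !pd_minus_fun, !pd_plus_fun by auto.
      funext2. ring. }
  apply (vanishes_to_plus r); auto.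
  - apply smooth_eikonal_defect; auto.
  - apply smooth2_grad_dot; auto. apply smooth2_plus; auto.
  - replace k with (k + 0)%nat by lia.
    apply (vanishes_to_grad_dot r); auto using vanishes_to_0. apply smooth2_plus; auto.
Qed.

Definition qform (a b : R) (x y : R) : R := a / 2 * (x * x) + b / 2 * (y * y).

Lemma smooth2_qform a b : smooth2 (qform a b).
Proof.
  apply smooth2_ext with (fun x y => a / 2 * monomial 2 0 x y + b / 2 * monomial 0 2 x y).
  - intros; unfold monomial, sep, qform; simpl; ring.
  - apply smooth2_plus; apply smooth2_scal, smooth2_monomial.
Qed.

Lemma pd_qform_x a b x y : pd DX (qform a b) x y = a * x.
Proof. apply is_derive_unique. unfold qform. auto_derive; [exact I | field]. Qed.

Lemma pd_qform_y a b x y : pd DY (qform a b) x y = b * y.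
Proof. apply is_derive_unique. unfold qform. auto_derive; [exact I | field]. Qed.

Lemma grad_dot_qform_hpoly a b n c :
  grad_dot (qform a b) (hpoly n c) = hpoly n (fun i => c i * (a * INR i + b * INR (n - i))).
Proof.
  funext2. unfold grad_dot. rewrite pd_qform_x, pd_qform_y, <- hpoly_euler. ring.
Qed.

Lemma weight_pos a b i n : 0 < a -> 0 < b -> (0 < n)%nat -> 0 < a * INR i + b * INR (n - i).
Proof.
  intros Ha Hb Hn. pose proof (pos_INR i). pose proof (pos_INR (n - i)).
  destruct i as [|i].
  - rewrite Nat.sub_0_r. assert (0 < INR n) by (apply lt_0_INR; lia). simpl. nra.
  - assert (0 < INR (S i)) by (apply lt_0_INR; lia). nra.
Qed.

Section FormalSolution.

Variables (h : R -> R -> R) (a b rh : R).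
Hypotheses (Hrh : 0 < rh) (Ha : 0 < a) (Hb : 0 < b) (Hh : smooth_on_disk rh h).

(* Chosen so that the degree-n part of the defect is cancelled: 2 (a x d/dx + b y d/dy) acts on
   x^i y^(n-i) by multiplication with 2 (a i + b (n - i)). *)
Definition corr_coef (Z : R -> R -> R) (n i : nat) : R :=
  - jet (eikonal_defect h Z) i (n - i) /
    (2 * INR (fact i) * INR (fact (n - i)) * (a * INR i + b * INR (n - i))).

Lemma vanishes_to_defect_corrected Z n : smooth2 Z -> (0 < n)%nat ->
  vanishes_to n (eikonal_defect h Z) ->
  vanishes_to (S n) (fun x y => eikonal_defect h Z x y +
    2 * grad_dot (qform a b) (hpoly n (corr_coef Z n)) x y).
Proof.
  intros HZ Hn VE w Hw.
  rewrite (pdw_plus rh), pdw_scal, grad_dot_qform_hpoly, pdw_hpoly_0;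
    auto using smooth_eikonal_defect, in_disk0.
  2:{ apply smooth2_scal. rewrite grad_dot_qform_hpoly. apply smooth2_hpoly. }
  destruct (Nat.eqb_spec (length w) n) as [Hl | Hl].
  - rewrite (pdw_jet rh) by auto using smooth_eikonal_defect.
    pose proof (xcount_ycount w).
    unfold corr_coef. replace (n - xcount w)%nat with (ycount w) by lia.
    pose proof (INR_fact_neq_0 (xcount w)). pose proof (INR_fact_neq_0 (ycount w)).
    pose proof (weight_pos a b (xcount w) n Ha Hb Hn).
    replace (n - xcount w)%nat with (ycount w) in * by lia.
    field. repeat split; lra.
  - rewrite VE by lia. ring.
Qed.

Lemma vanishes_to_defect_step Z n : smooth2 Z -> (3 <= n)%nat ->
  vanishes_to 3 (fun x y => Z x y - qform a b x y) ->
  vanishes_to n (eikonal_defect h Z) ->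
  vanishes_to (S n) (eikonal_defect h (fun x y => Z x y + hpoly n (corr_coef Z n) x y)).
Proof.
  intros HZ Hn VR VE.
  set (Q := hpoly n (corr_coef Z n)).
  set (R0 := fun x y => Z x y - qform a b x y).
  assert (HQ : smooth2 Q) by apply smooth2_hpoly.
  assert (HR : smooth2 R0) by (apply smooth2_minus; auto using smooth2_qform).
  assert (VQ : forall d, vanishes_to (n - 1) (pd d Q)).
  { intros d. apply vanishes_to_pd. replace (S (n - 1)) with n by lia. apply vanishes_to_hpoly. }
  replace (eikonal_defect h (fun x y => Z x y + Q x y)) with
    (fun x y => (eikonal_defect h Z x y + 2 * grad_dot (qform a b) Q x y) +
                (2 * grad_dot R0 Q x y + grad_dot Q Q x y)).
  2:{ rewrite eikonal_defect_plus by auto. unfold R0.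
      rewrite grad_dot_minus_l by auto using smooth2_qform. funext2. ring. }
  apply (vanishes_to_plus rh); auto.
  - apply smooth_plus; auto using smooth_eikonal_defect.
    apply smooth2_scal, smooth2_grad_dot; auto using smooth2_qform.
  - apply smooth2_plus; [apply smooth2_scal |]; apply smooth2_grad_dot; auto.
  - apply vanishes_to_defect_corrected; auto. lia.
  - apply (vanishes_to_plus rh); auto.
    + apply smooth2_scal, smooth2_grad_dot; auto.
    + apply smooth2_grad_dot; auto.
    + apply vanishes_to_scal. replace (S n) with (2 + (n - 1))%nat by lia.
      apply (vanishes_to_grad_dot rh); auto.
    + apply vanishes_to_le with (n - 1 + (n - 1))%nat; [lia |].
      apply (vanishes_to_grad_dot rh); auto.
      replace (S (n - 1)) with n by lia. apply vanishes_to_hpoly.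
Qed.

Fixpoint approx_sol (m : nat) : R -> R -> R :=
  match m with
  | O => qform a b
  | S m => fun x y => approx_sol m x y + hpoly (m + 3) (corr_coef (approx_sol m) (m + 3)) x y
  end.

Lemma smooth2_approx_sol m : smooth2 (approx_sol m).
Proof.
  induction m as [|m IH]; simpl; [apply smooth2_qform |].
  apply smooth2_plus; auto using smooth2_hpoly.
Qed.

Hypotheses (H0 : h 0 0 = 0)
  (Hx : pdw (DX :: nil) h 0 0 = 0) (Hy : pdw (DY :: nil) h 0 0 = 0)
  (Hxx : pdw (DX :: DX :: nil) h 0 0 = 2 * a ^ 2) (Hxy : pdw (DX :: DY :: nil) h 0 0 = 0)
  (Hyy : pdw (DY :: DY :: nil) h 0 0 = 2 * b ^ 2).

Lemma vanishes_to_defect_qform : vanishes_to 3 (eikonal_defect h (qform a b)).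
Proof.
  replace (eikonal_defect h (qform a b)) with (fun x y => hpoly 2 (fun i =>
      match i with O => b ^ 2 | S (S O) => a ^ 2 | _ => 0 end) x y - h x y).
  2:{ funext2. unfold eikonal_defect. rewrite pd_qform_x, pd_qform_y.
      unfold hpoly, monomial, sep. simpl. ring. }
  intros w Hw.
  rewrite (pdw_minus rh _ _ (smooth2_hpoly _ _ rh) Hh w 0 0 (in_disk0 rh Hrh)).
  rewrite pdw_hpoly_0, (pdw_jet rh h) by auto.
  pose proof (xcount_ycount w) as Hc. rewrite <- Hc. rewrite <- Hc in Hw. clear Hc.
  revert Hw. generalize (xcount w) (ycount w). intros i j Hw.
  unfold jet. simpl in Hx, Hy, Hxx, Hxy, Hyy.
  destruct i as [|[|[|i]]]; destruct j as [|[|[|j]]]; try lia; simpl;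
    rewrite ?H0, ?Hx, ?Hy, ?Hxx, ?Hxy, ?Hyy; lra.
Qed.

Lemma vanishes_to_approx_sol m :
  vanishes_to 3 (fun x y => approx_sol m x y - qform a b x y) /\
  vanishes_to (m + 3) (eikonal_defect h (approx_sol m)).
Proof.
  induction m as [|m [IH1 IH2]].
  - split; [| exact vanishes_to_defect_qform].
    intros w _. cbn [approx_sol]. rewrite (pdw_minus 1 _ _ (smooth2_qform a b 1) (smooth2_qform a b 1) w 0 0
      (in_disk0 1 Rlt_0_1)). ring.
  - simpl. set (Q := hpoly (m + 3) (corr_coef (approx_sol m) (m + 3))). split.
    + replace (fun x y => approx_sol m x y + Q x y - qform a b x y)
        with (fun x y => (approx_sol m x y - qform a b x y) + Q x y) by (funext2; ring).
      apply (vanishes_to_plus 1); auto using Rlt_0_1.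
      * apply smooth2_minus; auto using smooth2_approx_sol, smooth2_qform.
      * apply smooth2_hpoly.
      * apply vanishes_to_le with (m + 3)%nat; [lia | apply vanishes_to_hpoly].
    + replace (S m + 3)%nat with (S (m + 3)) by lia.
      apply vanishes_to_defect_step; auto using smooth2_approx_sol. lia.
Qed.

End FormalSolution.

(* The Taylor coefficients of the formal solution, beyond its quadratic part: the degree-d part
   of approx_sol m - qform a b is hpoly d (sol_coef h a b d) for 3 <= d <= m + 2. *)
Definition sol_coef h a b (d i : nat) : R :=
  if Nat.ltb d 3 then 0 else corr_coef h a b (approx_sol h a b (d - 3)) d i.

Lemma pdw_approx_sol_0 h a b m w :
  pdw w (fun x y => approx_sol h a b m x y - qform a b x y) 0 0 =
  if Nat.leb (length w) (m + 2)
  then sol_coef h a b (length w) (xcount w) * INR (fact (xcount w)) * INR (fact (ycount w))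
  else 0.
Proof.
  induction m as [|m IH].
  - cbn [approx_sol]. rewrite (pdw_minus 1 _ _ (smooth2_qform a b 1) (smooth2_qform a b 1) w 0 0
      (in_disk0 1 Rlt_0_1)).
    destruct (Nat.leb_spec (length w) (0 + 2)); [| ring].
    unfold sol_coef. replace (Nat.ltb (length w) 3) with true
      by (symmetry; apply Nat.ltb_lt; lia). simpl. ring.
  - simpl. set (Q := hpoly (m + 3) (corr_coef h a b (approx_sol h a b m) (m + 3))).
    replace (fun x y => approx_sol h a b m x y + Q x y - qform a b x y)
      with (fun x y => (approx_sol h a b m x y - qform a b x y) + Q x y) by (funext2; ring).
    rewrite pdw_plus_fun, IH; unfold Q; [rewrite pdw_hpoly_0 | |].
    2:{ apply smooth2_minus; auto using smooth2_approx_sol, smooth2_qform. }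
    2:{ apply smooth2_hpoly. }
    destruct (Nat.leb_spec (length w) (m + 2));
    destruct (Nat.eqb_spec (length w) (m + 3)) as [E | ];
    destruct (Nat.leb_spec (length w) (S (m + 2))); try lia; try ring.
    rewrite E. unfold sol_coef. replace (Nat.ltb (m + 3) 3) with false
      by (symmetry; apply Nat.ltb_ge; lia).
    replace (m + 3 - 3)%nat with m by lia. ring.
Qed.

Lemma vanishes_to_jet_match_approx_sol h a b m T :
  smooth2 T ->
  (forall w, pdw w T 0 0 =
     sol_coef h a b (length w) (xcount w) * INR (fact (xcount w)) * INR (fact (ycount w))) ->
  vanishes_to (m + 3) (fun x y => qform a b x y + T x y - approx_sol h a b m x y).
Proof.
  intros HT HTjet w Hw.
  replace (fun x y => qform a b x y + T x y - approx_sol h a b m x y)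
    with (fun x y => T x y - (approx_sol h a b m x y - qform a b x y)) by (funext2; ring).
  rewrite pdw_minus_fun, HTjet, pdw_approx_sol_0; auto.
  - replace (Nat.leb (length w) (m + 2)) with true by (symmetry; apply Nat.leb_le; lia). ring.
  - apply smooth2_minus; auto using smooth2_approx_sol, smooth2_qform.
Qed.

(** * Series of smooth functions *)

Lemma ex_series_dominated (u M : nat -> R) :
  ex_series M -> (forall n, Rabs (u n) <= M n) -> ex_series u.
Proof. intros HM H. apply (@ex_series_le R_AbsRing R_CompleteNormedModule u M); auto. Qed.

Lemma Series_zero : Series (fun _ => 0) = 0.
Proof.
  rewrite (Series_ext (fun _ => 0) (fun n => 0 * 1)) by (intros; ring).
  rewrite Series_scal_l. ring.
Qed.

Lemma Series_single N v : Series (fun d => if Nat.eqb N d then v else 0) = v.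
Proof.
  assert (Hfar : forall k, Nat.eqb N (N + S k) = false) by (intros; apply Nat.eqb_neq; lia).
  rewrite (Series_incr_n_aux _ N).
  2:{ intros k Hk. replace (Nat.eqb N k) with false by (symmetry; apply Nat.eqb_neq; lia). auto. }
  rewrite Series_incr_1, Nat.add_0_r, Nat.eqb_refl.
  - rewrite (Series_ext _ (fun _ => 0)), Series_zero; [ring |]. intros k. rewrite Hfar. auto.
  - apply ex_series_dominated with (fun k => (/ 2) ^ k * Rabs v).
    + apply ex_series_scal_r, ex_series_geom. rewrite Rabs_right; lra.
    + intros [|k].
      * rewrite Nat.add_0_r, Nat.eqb_refl. simpl. lra.
      * rewrite Hfar, Rabs_R0. apply Rmult_le_pos; [apply pow_le; lra | apply Rabs_pos].
Qed.

Lemma series_tail_small (M : nat -> R) : ex_series M -> forall eps, 0 < eps ->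
  exists N, Rabs (Series (fun k => M (S N + k)%nat)) < eps.
Proof.
  intros HM eps Heps.
  pose proof (Series_correct M HM) as HS. apply is_series_Reals in HS.
  destruct (HS eps Heps) as [N HN].
  exists N. rewrite (Series_incr_n M (S N)) in HN by (auto; lia).
  specialize (HN N (le_n _)). unfold R_dist in HN. simpl pred in HN.
  rewrite Rabs_minus_sym in HN.
  replace (sum_f_R0 M N + Series (fun k => M (S N + k)%nat) - sum_f_R0 M N)
    with (Series (fun k => M (S N + k)%nat)) in HN by ring. auto.
Qed.

Section UniformSeries.

(* [near d p] is a family of neighbourhoods of a point, shrinking as [d] decreases. *)
Variables (P : Type) (near : R -> P -> Prop).
Hypothesis near_mono : forall d1 d2 p, 0 < d1 <= d2 -> near d1 p -> near d2 p.

Lemma near_finite (Q : nat -> P -> Prop) N :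
  (forall n, (n < N)%nat -> exists d, 0 < d /\ forall p, near d p -> Q n p) ->
  exists d, 0 < d /\ forall p, near d p -> forall n, (n < N)%nat -> Q n p.
Proof.
  induction N as [|N IH]; intros H.
  - exists 1; split; [lra |]. intros; lia.
  - destruct IH as [d1 [Hd1 H1]]. { intros; apply H; lia. }
    destruct (H N ltac:(lia)) as [d2 [Hd2 H2]].
    pose proof (Rmin_l d1 d2); pose proof (Rmin_r d1 d2).
    assert (0 < Rmin d1 d2) by (apply Rmin_pos; auto).
    exists (Rmin d1 d2). split; auto.
    intros p Hp n Hn. destruct (Nat.eq_dec n N).
    + subst. apply H2, near_mono with (Rmin d1 d2); auto; lra.
    + apply H1; [| lia]. apply near_mono with (Rmin d1 d2); auto; lra.
Qed.

(* Tannery's theorem: a dominated series of terms tending to 0 tends to 0. *)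
Lemma series_tends_to_0 (G : P -> nat -> R) (M : nat -> R) :
  ex_series M -> (forall p n, Rabs (G p n) <= M n) ->
  (forall n eps, 0 < eps -> exists d, 0 < d /\ forall p, near d p -> Rabs (G p n) < eps) ->
  forall eps, 0 < eps -> exists d, 0 < d /\ forall p, near d p -> Rabs (Series (G p)) < eps.
Proof.
  intros HM Hb Hl eps Heps.
  destruct (series_tail_small M HM (eps / 2)) as [N HN]; [lra |].
  assert (HSN : 0 < INR (S N)) by (apply lt_0_INR; lia).
  destruct (near_finite (fun n p => Rabs (G p n) < eps / (2 * INR (S N))) (S N))
    as [d [Hd Hd']].
  { intros n _. apply Hl. apply Rdiv_lt_0_compat; lra. }
  exists d. split; auto. intros p Hp.
  assert (exG : ex_series (G p)) by (apply ex_series_dominated with M; auto).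
  rewrite (Series_incr_n (G p) (S N)) by (auto; lia). simpl pred.
  assert (A1 : Rabs (sum_f_R0 (G p) N) <= eps / 2).
  { eapply Rle_trans; [apply sum_f_R0_triangle |].
    eapply Rle_trans; [apply (sum_Rle _ (fun _ => eps / (2 * INR (S N)))) |].
    - intros k Hk. left. apply Hd'; auto; lia.
    - rewrite sum_cte. right; field; lra. }
  assert (exM : ex_series (fun k => M (S N + k)%nat)) by (apply ex_series_incr_n; auto).
  assert (A2 : Rabs (Series (fun k => G p (S N + k)%nat)) <= Series (fun k => M (S N + k)%nat)).
  { eapply Rle_trans; [apply Series_Rabs |].
    - apply ex_series_dominated with (fun k => M (S N + k)%nat); auto.
      intros; rewrite Rabs_Rabsolu; auto.
    - apply Series_le; auto. intros; split; [apply Rabs_pos | auto]. }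
  pose proof (Rle_abs (Series (fun k => M (S N + k)%nat))).
  eapply Rle_lt_trans; [apply Rabs_triang | lra].
Qed.

End UniformSeries.

Lemma difference_quotient_bound f f' M t h :
  (forall u, is_derive f u (f' u)) -> (forall u, Rabs (f' u) <= M) ->
  Rabs ((f (t + h) - f t) / h - f' t) <= 2 * M.
Proof.
  intros Hd Hb. pose proof (Hb t). pose proof (Rabs_pos (f' t)).
  destruct (Req_dec h 0) as [-> | Hh].
  - replace ((f (t + 0) - f t) / 0 - f' t) with (- f' t)
      by (rewrite Rplus_0_r; unfold Rdiv; ring).
    rewrite Rabs_Ropp. lra.
  - destruct (MVT_gen f t (t + h) f') as [c [_ Hc]].
    + intros; apply Hd.
    + intros; apply continuity_pt_filterlim, (ex_derive_continuous f). eexists; apply Hd.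
    + rewrite Hc. replace (f' c * (t + h - t) / h - f' t) with (f' c - f' t) by (field; auto).
      eapply Rle_trans; [apply Rabs_triang |]. rewrite Rabs_Ropp. pose proof (Hb c). lra.
Qed.

Lemma is_derive_series (f f' : nat -> R -> R) (M : nat -> R) t :
  (forall n u, is_derive (f n) u (f' n u)) -> (forall n u, Rabs (f' n u) <= M n) ->
  ex_series M -> (forall u, ex_series (fun n => f n u)) ->
  is_derive (fun u => Series (fun n => f n u)) t (Series (fun n => f' n t)).
Proof.
  intros Hd Hb HM Hex. apply is_derive_Reals. intros eps Heps.
  set (G := fun h n => (f n (t + h) - f n t) / h - f' n t).
  assert (exf' : forall u, ex_series (fun n => f' n u))
    by (intros; apply ex_series_dominated with M; auto).
  assert (HM2 : ex_series (fun n => 2 * M n)) by exact (ex_series_scal_l 2 M HM).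
  destruct (series_tends_to_0 R (fun d h => h <> 0 /\ Rabs h < d)
              ltac:(intros d1 d2 p Hd12 [H1 H2]; split; auto; lra)
              G (fun n => 2 * M n) HM2) with eps as [d [Hd0 Hdd]]; auto.
  { intros h n. apply difference_quotient_bound; auto. }
  { intros n e He. destruct (proj1 (is_derive_Reals (f n) t (f' n t)) (Hd n t) e He) as [del Hdel].
    exists del. split; [apply cond_pos |]. intros h [Hh1 Hh2]. apply Hdel; auto. }
  exists (mkposreal d Hd0). simpl. intros h Hh1 Hh2.
  replace ((Series (fun n => f n (t + h)) - Series (fun n => f n t)) / h
           - Series (fun n => f' n t)) with (Series (G h)) by
    (unfold G, Rdiv; rewrite Series_minus, Series_scal_r, Series_minus; auto;
     apply ex_series_scal_r; apply (@ex_series_minus R_AbsRing R_NormedModule); auto).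
  apply Hdd. auto.
Qed.

Lemma continuity_2d_series (F : nat -> R -> R -> R) (M : nat -> R) x y :
  (forall n, continuity_2d_pt (F n) x y) -> (forall n u v, Rabs (F n u v) <= M n) ->
  ex_series M -> continuity_2d_pt (fun u v => Series (fun n => F n u v)) x y.
Proof.
  intros Hc Hb HM eps.
  set (G := fun (p : R * R) n => F n (fst p) (snd p) - F n x y).
  assert (HM2 : ex_series (fun n => 2 * M n)) by exact (ex_series_scal_l 2 M HM).
  assert (Hb2 : forall p n, Rabs (G p n) <= 2 * M n).
  { intros p n. unfold G. eapply Rle_trans; [apply Rabs_triang |]. rewrite Rabs_Ropp.
    pose proof (Hb n (fst p) (snd p)); pose proof (Hb n x y). lra. }
  destruct (series_tends_to_0 _ (fun d p => Rabs (fst p - x) < d /\ Rabs (snd p - y) < d)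
              ltac:(intros d1 d2 p Hd12 [H1 H2]; split; lra)
              G (fun n => 2 * M n) HM2 Hb2) with eps as [d [Hd0 Hdd]].
  { intros n e He. destruct (Hc n (mkposreal e He)) as [del Hdel].
    exists del. split; [apply cond_pos |]. intros p [H1 H2]. apply Hdel; auto. }
  { apply cond_pos. }
  exists (mkposreal d Hd0). simpl. intros u v Hu Hv.
  replace (Series (fun n => F n u v) - Series (fun n => F n x y)) with (Series (G (u, v)))
    by (unfold G; simpl; rewrite Series_minus; auto; apply ex_series_dominated with M; auto).
  apply Hdd. auto.
Qed.

Section SmoothSeries.

Variable T : nat -> R -> R -> R.
Hypothesis HT : forall n, smooth2 (T n).
Hypothesis HTbound :
  forall w, exists M, ex_series M /\ forall n x y, Rabs (pdw w (T n) x y) <= M n.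

Lemma pd_series_at w d x y :
  pd d (fun x y => Series (fun n => pdw w (T n) x y)) x y =
    Series (fun n => pdw (d :: w) (T n) x y) /\
  ex_pd d (fun x y => Series (fun n => pdw w (T n) x y)) x y.
Proof.
  destruct (HTbound (d :: w)) as [M [HM HMb]].
  destruct (HTbound w) as [M0 [HM0 HM0b]].
  assert (Hex : forall u v, ex_series (fun n => pdw w (T n) u v))
    by (intros; apply ex_series_dominated with M0; auto).
  destruct d; simpl.
  - assert (D : is_derive (fun u => Series (fun n => pdw w (T n) u y)) x
                          (Series (fun n => pd DX (pdw w (T n)) x y))).
    { apply (is_derive_series (fun n t => pdw w (T n) t y) (fun n t => pd DX (pdw w (T n)) t y) M);
        auto; intros n u; [apply Derive_correct, (smooth2_ex_pd (T n) DX w u y), HT | apply HMb]. }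
    split; [apply is_derive_unique, D | eexists; exact D].
  - assert (D : is_derive (fun u => Series (fun n => pdw w (T n) x u)) y
                          (Series (fun n => pd DY (pdw w (T n)) x y))).
    { apply (is_derive_series (fun n t => pdw w (T n) x t) (fun n t => pd DY (pdw w (T n)) x t) M);
        auto; intros n u; [apply Derive_correct, (smooth2_ex_pd (T n) DY w x u), HT | apply HMb]. }
    split; [apply is_derive_unique, D | eexists; exact D].
Qed.

Lemma pdw_series w :
  pdw w (fun x y => Series (fun n => T n x y)) = fun x y => Series (fun n => pdw w (T n) x y).
Proof.
  induction w as [|d w IH]; simpl; auto. rewrite IH. funext2. apply pd_series_at.
Qed.

Lemma smooth2_series : smooth2 (fun x y => Series (fun n => T n x y)).
Proof.
  intros r w x y _. rewrite pdw_series.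
  split; [| split]; try apply pd_series_at.
  apply (continuous_2d_iff (fun x y => Series (fun n => pdw w (T n) x y))).
  destruct (HTbound w) as [M0 [HM0 HM0b]].
  apply continuity_2d_series with M0; auto.
  intros n. apply (smooth_continuity _ (T n) w x y (HT n _) (in_disk_large x y)).
Qed.

End SmoothSeries.

(** * Flat functions and smooth cutoffs *)

Fixpoint peval (l : list R) (s : R) : R :=
  match l with nil => 0 | c :: l => c + s * peval l s end.

Fixpoint padd (l1 l2 : list R) : list R :=
  match l1, l2 with
  | nil, _ => l2
  | _, nil => l1
  | c1 :: l1, c2 :: l2 => (c1 + c2) :: padd l1 l2
  end.

Definition pscal (c : R) (l : list R) : list R := map (Rmult c) l.

Fixpoint pderiv (l : list R) : list R :=
  match l with nil => nil | c :: l => padd l (0 :: pderiv l) end.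

Lemma peval_add l1 l2 s : peval (padd l1 l2) s = peval l1 s + peval l2 s.
Proof.
  revert l2; induction l1 as [|c1 l1 IH]; intros [|c2 l2]; simpl; try ring.
  rewrite IH; ring.
Qed.

Lemma peval_scal c l s : peval (pscal c l) s = c * peval l s.
Proof. induction l as [|d l IH]; simpl; [ring |]. rewrite IH; ring. Qed.

Lemma is_derive_peval l s : is_derive (peval l) s (peval (pderiv l) s).
Proof.
  apply is_derive_Reals.
  induction l as [|c l IH]; simpl; [apply (derivable_pt_lim_const 0) |].
  rewrite peval_add. simpl.
  replace (peval l s + (0 + s * peval (pderiv l) s))
    with (0 + (1 * peval l s + id s * peval (pderiv l) s)) by (unfold id; ring).
  exact (derivable_pt_lim_plus (fct_cte c) (mult_fct id (peval l)) s 0 _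
    (derivable_pt_lim_const c s) (derivable_pt_lim_mult id (peval l) s 1 _ (derivable_pt_lim_id s) IH)).
Qed.

Lemma peval_bound l : exists A k, 0 <= A /\
  forall s, 0 <= s -> Rabs (peval l s) <= A * (1 + s) ^ k.
Proof.
  induction l as [|c l IH].
  - exists 0, 0%nat. split; [lra |]. intros; simpl. rewrite Rabs_R0; lra.
  - destruct IH as [A [k [HA H]]]. exists (Rabs c + A), (S k). split.
    { pose proof (Rabs_pos c); lra. }
    intros s Hs. simpl. specialize (H s Hs).
    assert (1 <= (1 + s) ^ k) by (apply pow_R1_Rle; lra).
    pose proof (Rabs_pos c); pose proof (Rabs_pos (peval l s)).
    eapply Rle_trans; [apply Rabs_triang |]. rewrite Rabs_mult, (Rabs_right s) by lra.
    set (Y := (1 + s) ^ k) in *. set (P := Rabs (peval l s)) in *.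
    assert (s * P <= s * (A * Y)) by (apply Rmult_le_compat_l; lra).
    assert (s * (A * Y) <= (1 + s) * (A * Y)) by (apply Rmult_le_compat_r; [apply Rmult_le_pos |]; lra).
    assert (1 <= (1 + s) * Y) by nra.
    assert (Rabs c <= Rabs c * ((1 + s) * Y)) by nra.
    nra.
Qed.

Lemma exp_ge_pow m x : 0 <= x -> (x / INR (S m)) ^ S m <= exp x.
Proof.
  intros Hx. assert (Hc : 0 < INR (S m)) by (apply lt_0_INR; lia).
  set (y := x / INR (S m)).
  assert (Hy : 0 <= y) by (unfold y; apply Rdiv_le_0_compat; lra).
  replace x with (INR (S m) * y) by (unfold y; field; lra).
  replace (exp (INR (S m) * y)) with (exp y ^ S m).
  - apply pow_incr. split; auto. pose proof (exp_ineq1_le y). lra.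
  - generalize (S m); intros n. induction n as [|n IH]; simpl.
    + rewrite Rmult_0_l, exp_0; auto.
    + rewrite IH, <- exp_plus. f_equal. destruct n; simpl; ring.
Qed.

Lemma pow_exp_bound k s : 0 <= s ->
  (1 + s) ^ k * exp (- s) <= exp 1 * INR (S k) ^ S k / (1 + s).
Proof.
  intros Hs. set (X := 1 + s). set (c := INR (S k)).
  assert (HX : 0 < X) by (unfold X; lra). assert (Hc : 0 < c) by (apply lt_0_INR; lia).
  pose proof (exp_ge_pow k X ltac:(lra)) as H. fold c in H.
  unfold Rdiv in H. rewrite Rpow_mult_distr, pow_inv in H.
  assert (E : exp (- s) = exp 1 / exp X)
    by (unfold X, Rdiv; rewrite <- exp_Ropp, <- exp_plus; f_equal; ring).
  rewrite E.
  assert (0 < X ^ k) by (apply pow_lt; auto).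
  assert (Hck : 0 < c ^ S k) by (apply pow_lt; auto).
  assert (0 < exp X) by apply exp_pos. assert (0 < exp 1) by apply exp_pos.
  assert (H' : X ^ S k <= exp X * c ^ S k).
  { apply Rmult_le_reg_r with (/ c ^ S k); [apply Rinv_0_lt_compat; auto |].
    rewrite Rmult_assoc, Rinv_r by lra. lra. }
  unfold Rdiv. apply Rmult_le_reg_r with (exp X * X); [nra |].
  replace (X ^ k * (exp 1 * / exp X) * (exp X * X)) with (exp 1 * X ^ S k) by (simpl; field; lra).
  replace (exp 1 * c ^ S k * / X * (exp X * X)) with (exp 1 * (exp X * c ^ S k)) by (field; lra).
  apply Rmult_le_compat_l; lra.
Qed.

Lemma peval_exp_small l : forall eps, 0 < eps -> exists d, 0 < d /\
  forall h, 0 < h < d -> Rabs (peval l (/ h)) * exp (- / h) < eps.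
Proof.
  intros eps Heps. destruct (peval_bound l) as [A [k [HA Hb]]].
  set (C := A * (exp 1 * INR (S k) ^ S k)).
  assert (HC : 0 <= C).
  { unfold C. apply Rmult_le_pos; auto. apply Rmult_le_pos; [left; apply exp_pos |].
    apply pow_le, pos_INR. }
  exists (eps / (C + 1)). split; [apply Rdiv_lt_0_compat; lra |].
  intros h [Hh1 Hh2].
  assert (Hs : 0 <= / h) by (left; apply Rinv_0_lt_compat; auto).
  specialize (Hb (/ h) Hs). pose proof (pow_exp_bound k (/ h) Hs) as P.
  assert (0 < exp (- / h)) by apply exp_pos.
  assert (Q1 : Rabs (peval l (/ h)) * exp (- / h) <= C / (1 + / h)).
  { eapply Rle_trans; [apply Rmult_le_compat_r; [lra | exact Hb] |].
    replace (C / (1 + / h)) with (A * (exp 1 * INR (S k) ^ S k / (1 + / h)))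
      by (unfold C, Rdiv; ring).
    rewrite Rmult_assoc. apply Rmult_le_compat_l; auto. }
  assert (Q2 : C / (1 + / h) <= C * h).
  { unfold Rdiv. apply Rmult_le_compat_l; auto.
    replace h with (/ / h) at 2 by (field; lra).
    apply Rinv_le_contravar; [apply Rinv_0_lt_compat; auto | lra]. }
  assert (Q3 : C * h < eps).
  { apply Rle_lt_trans with ((C + 1) * h); [nra |].
    apply Rmult_lt_reg_l with (/ (C + 1)); [apply Rinv_0_lt_compat; lra |].
    rewrite <- Rmult_assoc, Rinv_l by lra. unfold Rdiv in Hh2. lra. }
  lra.
Qed.

(* The functions t |-> p(1/t) exp(-1/t) for t > 0, extended by 0: a class closed under
   differentiation, all of whose members are flat at 0. *)
Definition flat_fun (l : list R) (t : R) : R :=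
  if Rle_dec t 0 then 0 else peval l (/ t) * exp (- / t).

Definition flat_deriv (l : list R) : list R := 0 :: 0 :: padd l (pscal (-1) (pderiv l)).

Lemma is_derive_flat_fun_neg l t : t < 0 -> is_derive (flat_fun l) t (flat_fun (flat_deriv l) t).
Proof.
  intros Ht. apply is_derive_ext_loc with (fun _ => 0).
  - apply locally_of_ball with (mkposreal (- t) ltac:(lra)). simpl. intros u Hu.
    unfold flat_fun. destruct (Rle_dec u 0); auto.
    apply Rabs_def2 in Hu. lra.
  - unfold flat_fun. destruct (Rle_dec t 0); [| lra]. apply (is_derive_const 0).
Qed.

Lemma is_derive_flat_fun_0 l : is_derive (flat_fun l) 0 (flat_fun (flat_deriv l) 0).
Proof.
  apply is_derive_Reals. intros eps Heps.
  destruct (peval_exp_small (0 :: l) eps Heps) as [d [Hd Hdd]].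
  exists (mkposreal d Hd). simpl. intros h Hh Hhd.
  unfold flat_fun. rewrite Rplus_0_l. destruct (Rle_dec 0 0); [| lra]. destruct (Rle_dec h 0).
  - replace ((0 - 0) / h - 0) with 0 by (field; auto). rewrite Rabs_R0; auto.
  - apply Rabs_def2 in Hhd. specialize (Hdd h ltac:(lra)). simpl in Hdd.
    replace ((peval l (/ h) * exp (- / h) - 0) / h - 0)
      with ((0 + / h * peval l (/ h)) * exp (- / h)) by (field; lra).
    rewrite Rabs_mult, (Rabs_right (exp _)) by (left; apply exp_pos). auto.
Qed.

Lemma is_derive_flat_fun_pos l t : 0 < t -> is_derive (flat_fun l) t (flat_fun (flat_deriv l) t).
Proof.
  intros Ht. apply is_derive_ext_loc with (fun u => peval l (/ u) * exp (- / u)).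
  - apply locally_of_ball with (mkposreal t Ht). simpl. intros u Hu.
    unfold flat_fun. destruct (Rle_dec u 0); auto.
    apply Rabs_def2 in Hu. lra.
  - assert (Dinv : is_derive (fun u => / u) t (- / (t * t))) by (auto_derive; [lra | field; lra]).
    pose proof (is_derive_comp (peval l) (fun u => / u) t _ _ (is_derive_peval l (/ t)) Dinv).
    assert (Dexp : is_derive (fun u => exp (- / u)) t (exp (- / t) * / (t * t)))
      by (auto_derive; [lra | field; lra]).
    apply (is_derive_ext (fun u => peval l (/ u) * exp (- / u))); [reflexivity |].
    replace (flat_fun (flat_deriv l) t) with
      ((- / (t * t) * peval (pderiv l) (/ t)) * exp (- / t) +
        peval l (/ t) * (exp (- / t) * / (t * t))).
    + apply (is_derive_mult (fun u => peval l (/ u)) (fun u => exp (- / u))); auto.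
      intros; apply Rmult_comm.
    + unfold flat_fun, flat_deriv. destruct (Rle_dec t 0); [lra |].
      simpl peval. rewrite peval_add, peval_scal. field. lra.
Qed.

Lemma is_derive_flat_fun l t : is_derive (flat_fun l) t (flat_fun (flat_deriv l) t).
Proof.
  destruct (Rtotal_order t 0) as [Ht | [-> | Ht]].
  - apply is_derive_flat_fun_neg; auto.
  - apply is_derive_flat_fun_0.
  - apply is_derive_flat_fun_pos; auto.
Qed.

Lemma smooth1_flat_fun l : smooth1 (flat_fun l).
Proof.
  intros n; revert l; induction n as [|n IH]; intros l x.
  - eexists; apply is_derive_flat_fun.
  - rewrite Derive_n_S.
    replace (Derive (flat_fun l)) with (flat_fun (flat_deriv l)); [apply IH |].
    apply functional_extensionality; intro t. symmetry. apply is_derive_unique, is_derive_flat_fun.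
Qed.

Definition psi : R -> R := flat_fun (1 :: nil).

Lemma psi_pos t : 0 < t -> 0 < psi t.
Proof.
  intros Ht. unfold psi, flat_fun. destruct (Rle_dec t 0); [lra |]. simpl.
  rewrite Rmult_0_r, Rplus_0_r, Rmult_1_l. apply exp_pos.
Qed.

Lemma psi_le_0 t : t <= 0 -> psi t = 0.
Proof. intros Ht. unfold psi, flat_fun. destruct (Rle_dec t 0); [auto | lra]. Qed.

Lemma smooth1_ext f g : (forall x, f x = g x) -> smooth1 f -> smooth1 g.
Proof. intros E H. replace g with f; [exact H | apply functional_extensionality, E]. Qed.

Definition bump (t : R) : R := psi t * psi (1 - t).

Lemma smooth1_bump : smooth1 bump.
Proof.
  apply smooth1_mult; [apply smooth1_flat_fun |].
  apply smooth1_ext with (fun t => psi (1 + -1 * t)); [intros; f_equal; ring |].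
  apply smooth1_affine, smooth1_flat_fun.
Qed.

Lemma continuous_bump t : continuous bump t.
Proof. apply (ex_derive_continuous bump), (smooth1_bump 0%nat t). Qed.

Lemma bump_out t : t <= 0 \/ 1 <= t -> bump t = 0.
Proof.
  unfold bump. intros [H | H]; [rewrite (psi_le_0 t) | rewrite (psi_le_0 (1 - t))]; lra.
Qed.

Definition bump_int (t : R) : R := RInt bump 0 t.

Lemma ex_RInt_bump a b : ex_RInt bump a b.
Proof. apply (@ex_RInt_continuous R_CompleteNormedModule). intros; apply continuous_bump. Qed.

Lemma is_derive_bump_int t : is_derive bump_int t (bump t).
Proof.
  apply (is_derive_RInt bump bump_int 0 t); [| apply continuous_bump].
  exists (mkposreal 1 Rlt_0_1). intros b _. apply (@RInt_correct R_CompleteNormedModule), ex_RInt_bump.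
Qed.

Lemma bump_int_le_0 t : t <= 0 -> bump_int t = 0.
Proof.
  intros Ht. unfold bump_int. rewrite (RInt_ext bump (fun _ => 0)), RInt_const.
  - unfold scal; simpl; unfold mult; simpl; ring.
  - intros x Hx. rewrite Rmin_right, Rmax_left in Hx by lra. apply bump_out; lra.
Qed.

Lemma bump_int_ge_1 t : 1 <= t -> bump_int t = bump_int 1.
Proof.
  intros Ht. unfold bump_int. rewrite <- (RInt_Chasles bump 0 1 t) by apply ex_RInt_bump.
  rewrite (RInt_ext bump (fun _ => 0) 1 t), RInt_const.
  - unfold scal, plus; simpl; unfold mult, plus; simpl. ring.
  - intros x Hx. rewrite Rmin_left, Rmax_right in Hx by lra. apply bump_out; lra.
Qed.

Lemma bump_int_1_pos : 0 < bump_int 1.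
Proof.
  apply RInt_gt_0; [lra | | intros; apply continuous_bump].
  intros x Hx. apply Rmult_lt_0_compat; apply psi_pos; lra.
Qed.

Definition smooth_step (t : R) : R := bump_int t / bump_int 1.

Lemma smooth1_smooth_step : smooth1 smooth_step.
Proof.
  apply smooth1_of_derive with (fun t => / bump_int 1 * bump t).
  - intros t. apply (is_derive_ext (fun t => / bump_int 1 * bump_int t)).
    + intros u. unfold smooth_step, Rdiv. apply Rmult_comm.
    + apply is_derive_scal, is_derive_bump_int.
  - apply smooth1_scal, smooth1_bump.
Qed.

Lemma smooth_step_le_0 t : t <= 0 -> smooth_step t = 0.
Proof. intros; unfold smooth_step; rewrite (bump_int_le_0 t) by auto. unfold Rdiv; ring. Qed.

Lemma smooth_step_ge_1 t : 1 <= t -> smooth_step t = 1.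
Proof.
  intros; unfold smooth_step; rewrite (bump_int_ge_1 t) by auto.
  pose proof bump_int_1_pos. field; lra.
Qed.

Definition cutoff (u : R) : R := smooth_step (2 + 2 * u) * smooth_step (2 - 2 * u).

Lemma smooth1_cutoff : smooth1 cutoff.
Proof.
  apply smooth1_mult; [apply smooth1_affine, smooth1_smooth_step |].
  apply smooth1_ext with (fun u => smooth_step (2 + -2 * u)); [intros; f_equal; ring |].
  apply smooth1_affine, smooth1_smooth_step.
Qed.

Lemma cutoff_small u : Rabs u <= 1 / 2 -> cutoff u = 1.
Proof.
  intros Hu. apply Rabs_le_between in Hu. unfold cutoff.
  rewrite !smooth_step_ge_1 by lra. ring.
Qed.

Lemma cutoff_large u : 1 <= Rabs u -> cutoff u = 0.
Proof.
  unfold cutoff. destruct (Rcase_abs u); [rewrite Rabs_left | rewrite Rabs_right]; intros; try lra.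
  - rewrite (smooth_step_le_0 (2 + 2 * u)) by lra. ring.
  - rewrite (smooth_step_le_0 (2 - 2 * u)) by lra. ring.
Qed.

Definition cut_pow (m : nat) (u : R) : R := u ^ m * cutoff u.

Lemma smooth1_cut_pow m : smooth1 (cut_pow m).
Proof. apply smooth1_mult; [apply smooth1_pow | apply smooth1_cutoff]. Qed.

Lemma Derive_n_cut_pow_bounded m k :
  exists B, 0 <= B /\ forall u, Rabs (Derive_n (cut_pow m) k u) <= B.
Proof.
  destruct (continuity_ab_maj (fun u => Rabs (Derive_n (cut_pow m) k u)) (-1) 1) as [M [HM _]].
  - lra.
  - intros c _. apply (continuity_pt_comp (Derive_n (cut_pow m) k) Rabs).
    + apply smooth1_continuity, smooth1_cut_pow.
    + apply Rcontinuity_abs.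
  - exists (Rabs (Derive_n (cut_pow m) k M)). split; [apply Rabs_pos |].
    intros u. destruct (Rle_dec (Rabs u) 1) as [H | H].
    + apply HM. apply Rabs_le_between; auto.
    + assert (Hloc : locally u (fun t => cut_pow m t = 0)).
      { apply locally_of_ball with (mkposreal (Rabs u - 1) ltac:(lra)). simpl. intros t Ht.
        unfold cut_pow. rewrite cutoff_large; [ring |].
        pose proof (Rabs_triang_inv u (u - t)). replace (u - (u - t)) with t in * by ring.
        rewrite Rabs_minus_sym in Ht. lra. }
      rewrite (Derive_n_ext_loc _ (fun _ => 0) k u Hloc).
      destruct k; [| rewrite Derive_n_const]; simpl; rewrite Rabs_R0; apply Rabs_pos.
Qed.

Definition cut_pow_bound (m k : nat) : R :=
  proj1_sig (constructive_indefinite_description _ (Derive_n_cut_pow_bounded m k)).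

Lemma cut_pow_bound_spec m k :
  0 <= cut_pow_bound m k /\ forall u, Rabs (Derive_n (cut_pow m) k u) <= cut_pow_bound m k.
Proof. unfold cut_pow_bound. destruct (constructive_indefinite_description _ _); auto. Qed.

(* x^m cut off at scale e: equal to x^m for |x| <= e / 2, with k-th derivative of size
   e^(m-k). *)
Definition scaled_pow (m : nat) (e x : R) : R := e ^ m * cut_pow m (x / e).

Lemma smooth1_scaled_pow m e : smooth1 (scaled_pow m e).
Proof.
  apply smooth1_scal, smooth1_ext with (fun x => cut_pow m (0 + / e * x)).
  - intros; f_equal; unfold Rdiv; ring.
  - apply smooth1_affine, smooth1_cut_pow.
Qed.

Lemma Derive_n_scaled_pow m e k x :
  Derive_n (scaled_pow m e) k x = e ^ m * ((/ e) ^ k * Derive_n (cut_pow m) k (x / e)).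
Proof.
  unfold scaled_pow. rewrite Derive_n_scal.
  rewrite (Derive_n_ext _ (fun x => cut_pow m (0 + / e * x))) by (intros; f_equal; unfold Rdiv; ring).
  rewrite (Derive_n_affine _ 0 (/ e) (smooth1_cut_pow m)).
  replace (0 + / e * x) with (x / e) by (unfold Rdiv; ring). reflexivity.
Qed.

Lemma Derive_n_scaled_pow_bound m e k x : 0 < e ->
  Rabs (Derive_n (scaled_pow m e) k x) <= e ^ m * ((/ e) ^ k * cut_pow_bound m k).
Proof.
  intros He. rewrite Derive_n_scaled_pow, !Rabs_mult.
  assert (0 < e ^ m) by (apply pow_lt; auto).
  assert (0 < (/ e) ^ k) by (apply pow_lt, Rinv_0_lt_compat; auto).
  rewrite (Rabs_right (e ^ m)), (Rabs_right ((/ e) ^ k)) by lra.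
  apply Rmult_le_compat_l; [lra |]. apply Rmult_le_compat_l; [lra |]. apply cut_pow_bound_spec.
Qed.

Lemma scaled_pow_small m e x : 0 < e -> Rabs x <= e / 2 -> scaled_pow m e x = x ^ m.
Proof.
  intros He Hx. unfold scaled_pow, cut_pow. rewrite cutoff_small.
  - rewrite Rmult_1_r, <- Rpow_mult_distr. f_equal. field. lra.
  - unfold Rdiv. rewrite Rabs_mult, (Rabs_right (/ e)) by (left; apply Rinv_0_lt_compat; auto).
    apply Rmult_le_reg_l with e; auto. rewrite Rmult_comm, Rmult_assoc, Rinv_l by lra. lra.
Qed.

(** * Borel's lemma *)

Lemma sum_f_R0_ge_term (f : nat -> R) j n :
  (forall i, 0 <= f i) -> (j <= n)%nat -> f j <= sum_f_R0 f n.
Proof.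
  intros H Hj. induction n as [|n IH].
  - replace j with 0%nat by lia. simpl. lra.
  - simpl. destruct (Nat.eq_dec j (S n)) as [-> |].
    + assert (0 <= sum_f_R0 f n) by (apply cond_pos_sum; auto). lra.
    + pose proof (H (S n)). assert (f j <= sum_f_R0 f n) by (apply IH; lia). lra.
Qed.

Lemma pow_le_1 e n : 0 <= e <= 1 -> e ^ n <= 1.
Proof.
  intros He. induction n; simpl; [lra |].
  assert (0 <= e ^ n) by (apply pow_le; lra). nra.
Qed.

Section Borel.

(* The prescribed Taylor coefficients: C d i is the coefficient of x^i y^(d-i). *)
Variable C : nat -> nat -> R.

Let B := cut_pow_bound.

Lemma B_nonneg m k : 0 <= B m k.
Proof. apply cut_pow_bound_spec. Qed.

Definition borel_size (d : nat) : R :=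
  sum_f_R0 (fun i => Rabs (C d i) *
    sum_f_R0 (fun k => sum_f_R0 (fun l => B i k * B (d - i) l) d) d) d.

(* Shrinking the support of the degree-d term to scale borel_scale d makes all its derivatives
   of order < d smaller than 2^-d. *)
Definition borel_scale (d : nat) : R := / (2 ^ d * (1 + borel_size d)).

Definition borel_term (d : nat) : R -> R -> R := fun x y =>
  sum_f_R0 (fun i => C d i * sep (scaled_pow i (borel_scale d))
                                 (scaled_pow (d - i) (borel_scale d)) x y) d.

Definition borel_bound (k l d : nat) : R :=
  borel_scale d ^ d * (/ borel_scale d) ^ (k + l) *
  sum_f_R0 (fun i => Rabs (C d i) * (B i k * B (d - i) l)) d.

Lemma borel_size_nonneg d : 0 <= borel_size d.
Proof.
  apply cond_pos_sum; intros i. apply Rmult_le_pos; [apply Rabs_pos |].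
  apply cond_pos_sum; intros k; apply cond_pos_sum; intros l.
  apply Rmult_le_pos; apply B_nonneg.
Qed.

Lemma borel_scale_pos d : 0 < borel_scale d.
Proof.
  pose proof (borel_size_nonneg d).
  apply Rinv_0_lt_compat, Rmult_lt_0_compat; [apply pow_lt |]; lra.
Qed.

Lemma borel_scale_le_1 d : borel_scale d <= 1.
Proof.
  unfold borel_scale. pose proof (borel_size_nonneg d).
  assert (1 <= 2 ^ d) by (apply pow_R1_Rle; lra).
  rewrite <- Rinv_1. apply Rinv_le_contravar; nra.
Qed.

Lemma borel_scale_size d : borel_scale d * borel_size d <= (/ 2) ^ d.
Proof.
  unfold borel_scale. pose proof (borel_size_nonneg d). assert (0 < 2 ^ d) by (apply pow_lt; lra).
  rewrite pow_inv, Rinv_mult, Rmult_assoc.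
  rewrite <- (Rmult_1_r ((/ 2 ^ d))) at 2.
  apply Rmult_le_compat_l; [left; apply Rinv_0_lt_compat; auto |].
  apply Rmult_le_reg_l with (1 + borel_size d); [lra |].
  rewrite <- Rmult_assoc, Rinv_r by lra. lra.
Qed.

Lemma smooth2_borel_term d : smooth2 (borel_term d).
Proof.
  apply smooth2_sum. intros i. apply smooth2_scal, smooth2_sep; apply smooth1_scaled_pow.
Qed.

Lemma pdw_borel_term d w x y : pdw w (borel_term d) x y =
  sum_f_R0 (fun i => C d i * (Derive_n (scaled_pow i (borel_scale d)) (xcount w) x *
                              Derive_n (scaled_pow (d - i) (borel_scale d)) (ycount w) y)) d.
Proof.
  unfold borel_term. rewrite pdw_sum_fun.
  - apply sum_eq. intros i _. rewrite pdw_scal, pdw_sep. reflexivity.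
  - intros i. apply smooth2_scal, smooth2_sep; apply smooth1_scaled_pow.
Qed.

Lemma pdw_borel_term_le d w x y :
  Rabs (pdw w (borel_term d) x y) <= borel_bound (xcount w) (ycount w) d.
Proof.
  rewrite pdw_borel_term. pose proof (borel_scale_pos d) as He.
  unfold borel_bound. set (e := borel_scale d) in *.
  eapply Rle_trans; [apply sum_f_R0_triangle |].
  rewrite scal_sum. apply sum_Rle. intros i Hi.
  rewrite !Rabs_mult.
  pose proof (Derive_n_scaled_pow_bound i e (xcount w) x He).
  pose proof (Derive_n_scaled_pow_bound (d - i) e (ycount w) y He).
  pose proof (Rabs_pos (C d i)).
  pose proof (Rabs_pos (Derive_n (scaled_pow i e) (xcount w) x)).
  pose proof (Rabs_pos (Derive_n (scaled_pow (d - i) e) (ycount w) y)).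
  replace (Rabs (C d i) * (B i (xcount w) * B (d - i) (ycount w)) *
           (e ^ d * (/ e) ^ (xcount w + ycount w)))
    with (Rabs (C d i) * ((e ^ i * ((/ e) ^ xcount w * B i (xcount w))) *
          (e ^ (d - i) * ((/ e) ^ ycount w * B (d - i) (ycount w))))).
  - apply Rmult_le_compat_l; auto. apply Rmult_le_compat; auto.
  - replace (e ^ d) with (e ^ i * e ^ (d - i)) by (rewrite <- pow_add; f_equal; lia).
    rewrite pow_add. ring.
Qed.

Lemma borel_bound_nonneg k l d : 0 <= borel_bound k l d.
Proof.
  pose proof (borel_scale_pos d). unfold borel_bound.
  apply Rmult_le_pos; [apply Rmult_le_pos |].
  - apply pow_le; lra.
  - apply pow_le; left; apply Rinv_0_lt_compat; lra.
  - apply cond_pos_sum; intros i. apply Rmult_le_pos; [apply Rabs_pos |].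
    apply Rmult_le_pos; apply B_nonneg.
Qed.

Lemma borel_bound_le k l d : (k + l < d)%nat -> borel_bound k l d <= (/ 2) ^ d.
Proof.
  intros Hd. pose proof (borel_scale_pos d). pose proof (borel_scale_le_1 d).
  unfold borel_bound. set (e := borel_scale d) in *.
  set (T := sum_f_R0 (fun i => Rabs (C d i) * (B i k * B (d - i) l)) d).
  assert (HS0 : 0 <= T).
  { apply cond_pos_sum; intros i. apply Rmult_le_pos; [apply Rabs_pos |].
    apply Rmult_le_pos; apply B_nonneg. }
  assert (HS : T <= borel_size d).
  { apply sum_Rle. intros i Hi. apply Rmult_le_compat_l; [apply Rabs_pos |].
    apply Rle_trans with (sum_f_R0 (fun l' => B i k * B (d - i) l') d).
    - apply (sum_f_R0_ge_term (fun l' => B i k * B (d - i) l')); [| lia].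
      intros; apply Rmult_le_pos; apply B_nonneg.
    - apply (sum_f_R0_ge_term (fun k' => sum_f_R0 (fun l' => B i k' * B (d - i) l') d)); [| lia].
      intros; apply cond_pos_sum; intros; apply Rmult_le_pos; apply B_nonneg. }
  assert (He : e ^ d * (/ e) ^ (k + l) <= e).
  { replace (e ^ d) with (e ^ S (d - S (k + l)) * e ^ (k + l))
      by (rewrite <- pow_add; f_equal; lia).
    rewrite Rmult_assoc, <- Rpow_mult_distr, Rinv_r, pow1, Rmult_1_r by lra. simpl.
    assert (0 <= e ^ (d - S (k + l)) <= 1) by (split; [apply pow_le | apply pow_le_1]; lra).
    nra. }
  assert (0 <= e ^ d * (/ e) ^ (k + l))
    by (apply Rmult_le_pos; apply pow_le; [| left; apply Rinv_0_lt_compat]; lra).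
  apply Rle_trans with (e * borel_size d); [| apply borel_scale_size].
  apply Rle_trans with (e * T); [apply Rmult_le_compat_r | apply Rmult_le_compat_l]; lra.
Qed.

Lemma ex_series_borel_bound k l : ex_series (borel_bound k l).
Proof.
  apply (@ex_series_incr_n R_AbsRing R_NormedModule (borel_bound k l) (S (k + l))).
  apply ex_series_dominated with (fun j => (/ 2) ^ j).
  - apply ex_series_geom. rewrite Rabs_right; lra.
  - intros j. rewrite Rabs_right by apply Rle_ge, borel_bound_nonneg.
    eapply Rle_trans; [apply borel_bound_le; lia |].
    rewrite pow_add.
    assert (0 < (/ 2) ^ j) by (apply pow_lt; lra).
    assert (0 <= (/ 2) ^ S (k + l) <= 1) by (split; [apply pow_le | apply pow_le_1]; lra).
    nra.
Qed.

Lemma pdw_borel_term_0 d w : pdw w (borel_term d) 0 0 =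
  if Nat.eqb (length w) d
  then C d (xcount w) * INR (fact (xcount w)) * INR (fact (ycount w)) else 0.
Proof.
  pose proof (borel_scale_pos d). set (r := borel_scale d / 2).
  assert (Hr : 0 < r) by (unfold r; lra).
  rewrite <- pdw_hpoly_0.
  apply (pdw_ext_disk r); [| apply in_disk0; auto].
  intros x y Hxy. destruct (in_disk_coord r x y Hr Hxy).
  unfold borel_term, hpoly. apply sum_eq. intros i _. unfold monomial, sep.
  rewrite !scaled_pow_small; auto.
Qed.

Lemma borel_lemma : exists S, smooth2 S /\ forall w,
  pdw w S 0 0 = C (length w) (xcount w) * INR (fact (xcount w)) * INR (fact (ycount w)).
Proof.
  assert (Hbound : forall w, exists M, ex_series M /\
            forall d x y, Rabs (pdw w (borel_term d) x y) <= M d).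
  { intros w. exists (borel_bound (xcount w) (ycount w)).
    split; [apply ex_series_borel_bound | intros; apply pdw_borel_term_le]. }
  exists (fun x y => Series (fun d => borel_term d x y)).
  split; [apply smooth2_series; auto using smooth2_borel_term |].
  intros w. rewrite pdw_series by auto using smooth2_borel_term.
  rewrite (Series_ext _ (fun d => if Nat.eqb (length w) d
      then C (length w) (xcount w) * INR (fact (xcount w)) * INR (fact (ycount w)) else 0)).
  - apply Series_single.
  - intros d. rewrite pdw_borel_term_0.
    destruct (Nat.eqb_spec (length w) d) as [<- |]; auto.
Qed.

End Borel.

Theorem corollary4p3 (h : R -> R -> R) (a b : R) :
  0 < a -> 0 < b -> Q_lin_indep a b ->
  (exists r, 0 < r /\ smooth_on_disk r h) ->
  (* Taylor expansion at (0,0): h = a^2 x^2 + b^2 y^2 + O(order >= 3) *)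
  h 0 0 = 0 ->
  pdw (DX :: nil) h 0 0 = 0 ->
  pdw (DY :: nil) h 0 0 = 0 ->
  pdw (DX :: DX :: nil) h 0 0 = 2 * a ^ 2 ->
  pdw (DX :: DY :: nil) h 0 0 = 0 ->
  pdw (DY :: DY :: nil) h 0 0 = 2 * b ^ 2 ->
  exists r, 0 < r /\ exists z : R -> R -> R,
    smooth_on_disk r z /\
    vanishes_inf_order_at0
      (fun x y => (pd DX z x y) ^ 2 + (pd DY z x y) ^ 2 - h x y).
Proof.
  intros Ha Hb _ [rh [Hrh Hh]] H0 Hx Hy Hxx Hxy Hyy.
  destruct (borel_lemma (sol_coef h a b)) as [T [HT HTjet]].
  set (z := fun x y => qform a b x y + T x y).
  assert (Hz : smooth2 z) by (apply smooth2_plus; auto using smooth2_qform).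
  exists 1. split; [lra |]. exists z. split; [apply Hz |].
  intros w. set (m := length w).
  destruct (vanishes_to_approx_sol h a b rh Hrh Ha Hb Hh H0 Hx Hy Hxx Hxy Hyy m) as [_ VE].
  apply (vanishes_to_eikonal_defect rh h z (approx_sol h a b m) (m + 2));
    auto using smooth2_approx_sol.
  - replace (S (m + 2)) with (m + 3)%nat by lia.
    apply vanishes_to_jet_match_approx_sol; auto.
  - apply vanishes_to_le with (m + 3)%nat; [lia | exact VE].
  - unfold m; lia.
Qed.
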